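(* Fix $r\in(0,1)$, $\gamma\in\mathbb R$, $b\in(0,\infty)$ and $\theta\in\mathbb R$ with $\theta/\pi$ irrational. For $\delta\in(0,\tfrac12)$ and integers $q,k\ge1$, $N\ge2$, let $E_{q,k}(\delta,N)$ be the set of all $\beta\in[0,\pi)$ such that $$\sup_{\tau\in[1,r^{-qk}]}\frac1N\#\Big\{n\in[N]:\ \big\|b\tau r^{\,q-qk(N-n)}\cos(\beta+\gamma-nqk\theta)\big\|\le\frac{r^{2qk}}{15}\Big\}>1-\delta,$$ and let $$E=\bigcap_{i\ge3}\ \bigcup_{q,k\ge1}\ \limsup_{N\to\infty}E_{q,k}(1/i,N).$$ Then $\dim_H E=0$.
   Context: For $x\in\mathbb R$, $\|x\|=\min\{|x-j|:j\in\mathbb Z\}$ is the distance to the nearest integer; $[N]=\{1,\dots,N\}$; $\limsup_{N}E_N=\bigcap_{N_0}\bigcup_{N\ge N_0}E_N$. *)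

From Stdlib Require Import Reals Lra Lia ZArith.
Open Scope R_scope.

(* ||x|| : distance from x to the nearest integer.  With m = up x - 1 the
   floor of x (m <= x < m+1), this is min(x - m, (m+1) - x). *)
Definition dist_int (x : R) : R :=
  Rmin (x - IZR (up x - 1)) (IZR (up x) - x).

Fixpoint count_upto (P : nat -> bool) (N : nat) : nat :=
  match N with
  | O => O
  | S M => (count_upto P M + (if P (S M) then 1 else 0))%nat
  end.

Definition Rle_b (x y : R) : bool := if Rle_dec x y then true else false.

Definition irrational (x : R) : Prop :=
  ~ (exists p q : Z, q <> 0%Z /\ x = IZR p / IZR q).

Definition prop_count (r gamma b theta : R) (q k N : nat) (tau beta : R) : R :=
  INR (count_upto (fun n =>
         Rle_b (dist_int (b * tau
                  * powerRZ r (Z.of_nat q - Z.of_nat (q * k * (N - n)))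
                  * cos (beta + gamma - INR n * INR q * INR k * theta)))
               (r ^ (2 * q * k) / 15)) N) / INR N.

Definition E_qk (r gamma b theta : R) (q k : nat) (delta : R) (N : nat) (beta : R) : Prop :=
  0 <= beta < PI /\
  exists m : R,
    is_lub (fun y => exists tau, 1 <= tau <= powerRZ r (- Z.of_nat (q * k)) /\
                                 y = prop_count r gamma b theta q k N tau beta) m
    /\ m > 1 - delta.

Definition limsup_set (A : nat -> R -> Prop) (x : R) : Prop :=
  forall N0 : nat, exists N : nat, (N0 <= N)%nat /\ (2 <= N)%nat /\ A N x.

Definition E_set (r gamma b theta : R) (beta : R) : Prop :=
  forall i : nat, (3 <= i)%nat ->
    exists q k : nat, (1 <= q)%nat /\ (1 <= k)%nat /\
      limsup_set (fun N => E_qk r gamma b theta q k (/ INR i) N) beta.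

Definition diam_le (U : R -> Prop) (d : R) : Prop :=
  forall x y, U x -> U y -> Rabs (x - y) <= d.

(* H^s_delta(E) = 0 : for every eps > 0 there is a countable delta-cover (U_n)
   of E with sum_n diam(U_n)^s <= eps (the d_n are upper bounds for the
   diameters, which does not change the infimum). *)
Definition Hcontent_delta_zero (s delta : R) (E : R -> Prop) : Prop :=
  forall eps, 0 < eps ->
    exists (U : nat -> R -> Prop) (d : nat -> R),
      (forall n, 0 < d n <= delta /\ diam_le (U n) (d n)) /\
      (forall x, E x -> exists n, U n x) /\
      (forall M, sum_f_R0 (fun n => Rpower (d n) s) M <= eps).

(* H^s(E) = lim_{delta -> 0} H^s_delta(E) = sup_delta H^s_delta(E) = 0 *)
Definition Hmeasure_zero (s : R) (E : R -> Prop) : Prop :=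
  forall delta, 0 < delta -> Hcontent_delta_zero s delta E.

Definition is_glb (S : R -> Prop) (m : R) : Prop :=
  (forall x, S x -> m <= x) /\ (forall m', (forall x, S x -> m' <= x) -> m' <= m).

Definition hausdorff_dim_is (E : R -> Prop) (d : R) : Prop :=
  is_glb (fun s => 0 <= s /\ Hmeasure_zero s E) d.

(* Fix [q, k] and put [rho = r^(-qk)], [a = qk theta]. Reading the terms of [E_qk]
   backwards, [z_j] (the term with [n = N - j]) grows like [rho^j] and satisfies
   [z_(j+2) = 2 rho cos(a) z_(j+1) - rho^2 z_j]. For [beta] in [E_qk(1/i, N)] and a
   suitable [tau], all but [N/i] of the [z_j] lie within [r^(2qk)/15] of an integer.
   Integer approximations of [(z_j, z_(j+1))] then propagate by rounding through the
   recurrence, except across runs of far terms, where a jump over [m] steps costs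
   [O((3 rho)^(2m))] choices but uses up about [m/3] far terms; so there are at most
   [C (1+lam)^j W^b] such pairs with [b] far terms. Since [sin a <> 0], two parameters
   sharing an approximating pair at time [j] differ by [O(rho^-j)]. Hence
   [E_qk(1/i, N)] is covered by [e^(O(lam N)) W^(N/i)] intervals of length
   [rho^(-N (1 - 2/i) + O(1))], whose [s]-content decays geometrically in [N] once [i]
   is large. As [i] is arbitrary, [E] is [H^s]-null for every [s > 0]. *)

From Stdlib Require Import Reals Lra Lia ZArith List Classical.
From Stdlib Require Import IndefiniteDescription.
Open Scope R_scope.

(** * Counting in boolean sequences *)

Fixpoint count_lt (f : nat -> bool) (j : nat) : nat :=
  match j with O => O | S j' => (count_lt f j' + (if f j' then 1 else 0))%nat end.

Lemma count_lt_S f j : count_lt f (S j) = (count_lt f j + (if f j then 1 else 0))%nat.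
Proof. reflexivity. Qed.

Lemma count_lt_mono f i j : (i <= j)%nat -> (count_lt f i <= count_lt f j)%nat.
Proof. induction 1; auto. rewrite count_lt_S; lia. Qed.

Lemma count_lt_shift f N :
  count_lt f (S N) = ((if f O then 1 else 0) + count_lt (fun j => f (S j)) N)%nat.
Proof. induction N; [simpl; lia|]. rewrite count_lt_S, IHN. simpl count_lt. lia. Qed.

Lemma count_lt_ext f g N : (forall j, (j < N)%nat -> f j = g j) -> count_lt f N = count_lt g N.
Proof.
  induction N; intros H; auto.
  rewrite !count_lt_S, H, IHN by (auto; intros; apply H; lia). auto.
Qed.

Lemma count_lt_negb g N : (count_lt (fun j => negb (g j)) N + count_lt g N = N)%nat.
Proof. induction N; auto. rewrite !count_lt_S. destruct (g N); simpl; lia. Qed.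

Lemma count_upto_rev P N : count_upto P N = count_lt (fun j => P (N - j)%nat) N.
Proof.
  induction N; auto. simpl count_upto. rewrite count_lt_shift, IHN. simpl. lia.
Qed.

Definition no_two_false (f : nat -> bool) (a L : nat) : Prop :=
  forall t, (a <= t)%nat -> (S t < a + L)%nat -> f t = true \/ f (S t) = true.

Lemma no_two_false_count f a L :
  no_two_false f a L -> (L <= S (2 * (count_lt f (a + L) - count_lt f a)))%nat.
Proof.
  revert a. induction L as [L IH] using lt_wf_ind. intros a H.
  destruct L as [|[|L]]; [lia|lia|].
  assert (HL : (L <= S (2 * (count_lt f (a + L) - count_lt f a)))%nat).
  { apply IH; [lia|]. intros t h1 h2. apply H; lia. }
  assert (Hm1 := count_lt_mono f (a + L) (a + S L) ltac:(lia)).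
  assert (Hm2 := count_lt_mono f a (a + L) ltac:(lia)).
  replace (a + S (S L))%nat with (S (S (a + L))) by lia.
  rewrite !count_lt_S.
  destruct (H (a + L)%nat) as [E|E]; try lia; rewrite E;
    [destruct (f (S (a + L))) | destruct (f (a + L)%nat)]; lia.
Qed.

Lemma no_two_false_count_last f a L :
  no_two_false f a L -> (1 <= L)%nat -> f (a + L - 1)%nat = true ->
  (L <= 2 * (count_lt f (a + L) - count_lt f a))%nat.
Proof.
  intros H H1 Hl. destruct L as [|L]; [lia|].
  assert (HL := no_two_false_count f a L ltac:(intros t ? ?; apply H; lia)).
  replace (a + S L)%nat with (S (a + L)) by lia. rewrite count_lt_S.
  replace (a + S L - 1)%nat with (a + L)%nat in Hl by lia. rewrite Hl.
  assert (Hm := count_lt_mono f a (a + L) ltac:(lia)). lia.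
Qed.

Lemma last_true_index (g : nat -> bool) K :
  (exists i, (i < K)%nat /\ g i = true) ->
  exists i, (i < K)%nat /\ g i = true /\
    forall i', (i < i')%nat -> (i' < K)%nat -> g i' = false.
Proof.
  induction K; intros [i [h1 h2]]; [lia|]. destruct (g K) eqn:E.
  - exists K. repeat split; auto; intros; lia.
  - destruct (Nat.eq_dec i K) as [->|]; [congruence|].
    destruct IHK as [i0 [a [b c]]]; [exists i; split; [lia|auto]|].
    exists i0. repeat split; [lia|auto|]. intros i' h h'.
    destruct (Nat.eq_dec i' K) as [->|]; auto. apply c; lia.
Qed.

Lemma length_flat_map_le {A B} (f : A -> list B) (g : A -> R) l :
  (forall x, In x l -> INR (length (f x)) <= g x) ->
  INR (length (flat_map f l)) <= fold_right (fun x acc => g x + acc) 0 l.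
Proof.
  induction l; simpl; intros H; [lra|].
  rewrite length_app, plus_INR.
  assert (H1 := H a (or_introl eq_refl)).
  assert (H2 := IHl (fun x hx => H x (or_intror hx))). lra.
Qed.

Lemma fold_right_const {A} (c : R) (l : list A) :
  fold_right (fun _ acc => c + acc) 0 l = INR (length l) * c.
Proof. induction l; simpl; [lra|]. rewrite IHl. destruct (length l); simpl; lra. Qed.

Lemma fold_right_scal {A} (c : R) (g : A -> R) l :
  fold_right (fun x acc => c * g x + acc) 0 l = c * fold_right (fun x acc => g x + acc) 0 l.
Proof. induction l; simpl; [ring|]. rewrite IHl. ring. Qed.

Lemma fold_right_geom_le t a n : 0 <= t < 1 ->
  fold_right (fun m acc => t ^ m + acc) 0 (seq a n) <= t ^ a / (1 - t).
Proof.
  intros Ht. revert a. induction n; intros a; simpl.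
  - apply Rmult_le_pos; [apply pow_le; lra | apply Rlt_le, Rinv_0_lt_compat; lra].
  - assert (H := IHn (S a)). simpl in H.
    assert (0 <= t ^ a) by (apply pow_le; lra).
    assert (t ^ a + t * t ^ a / (1 - t) = t ^ a / (1 - t)) by (field; lra).
    lra.
Qed.

Lemma Rabs_le_inv a b : Rabs a <= b -> -b <= a <= b.
Proof. unfold Rabs; destruct (Rcase_abs a); lra. Qed.

Definition round_nearest (x : R) : Z := (up (x + /2) - 1)%Z.

Lemma round_nearest_unique (z : Z) x : Rabs (IZR z - x) < /2 -> z = round_nearest x.
Proof.
  intros H. apply Rabs_def2 in H. unfold round_nearest.
  assert (E : (z + 1)%Z = up (x + /2)).
  { apply tech_up; rewrite plus_IZR; simpl; lra. }
  lia.
Qed.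

Lemma dist_int_le_ex x e : dist_int x <= e -> exists z : Z, Rabs (x - IZR z) <= e.
Proof.
  unfold dist_int, Rmin. destruct (archimed x) as [h1 h2].
  destruct (Rle_dec _ _); intros H.
  - exists (up x - 1)%Z. rewrite minus_IZR in *. change (IZR 1) with 1 in *.
    rewrite Rabs_right; lra.
  - exists (up x). rewrite Rabs_left1; lra.
Qed.

(* The integers of [[c - R, c + R]], possibly with a few more. *)
Definition int_window (c R : R) : list Z :=
  map (fun k => (up (c - R) - 1 + Z.of_nat k)%Z) (seq 0 (Z.to_nat (up (2 * R)) + 1)).

Lemma in_int_window c R u : 0 <= R -> Rabs (IZR u - c) <= R -> In u (int_window c R).
Proof.
  intros HR H. apply Rabs_le_inv in H. unfold int_window. apply in_map_iff.
  destruct (archimed (c - R)) as [a1 a2]. destruct (archimed (2 * R)) as [b1 b2].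
  set (s0 := (up (c - R) - 1)%Z).
  assert (Hs : IZR s0 = IZR (up (c - R)) - 1).
  { unfold s0. rewrite minus_IZR. change (IZR 1) with 1. ring. }
  assert (L1 : (s0 <= u)%Z) by (apply le_IZR; lra).
  assert (L2 : (u - s0 < up (2 * R) + 1)%Z).
  { apply lt_IZR. rewrite plus_IZR, minus_IZR. change (IZR 1) with 1. lra. }
  exists (Z.to_nat (u - s0)). split; [lia|]. apply in_seq. lia.
Qed.

Lemma length_int_window c R : 0 <= R -> INR (length (int_window c R)) <= 2 * R + 2.
Proof.
  intros HR. unfold int_window. rewrite length_map, length_seq.
  destruct (archimed (2 * R)) as [b1 b2].
  assert (0 < up (2 * R))%Z by (apply lt_IZR; simpl; lra).
  rewrite plus_INR, INR_IZR_INZ, Z2Nat.id by lia. simpl. lra.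
Qed.

(** * Second order linear recurrences *)

Definition lin_rec (rho c : R) (z : nat -> R) : Prop :=
  forall i, z (S (S i)) = 2 * rho * c * z (S i) - rho ^ 2 * z i.

Fixpoint rec_P (rho c : R) (m : nat) : R :=
  match m with O => 1 | S O => 0
  | S ((S m2) as m1) => 2 * rho * c * rec_P rho c m1 - rho ^ 2 * rec_P rho c m2 end.
Fixpoint rec_Q (rho c : R) (m : nat) : R :=
  match m with O => 0 | S O => 1
  | S ((S m2) as m1) => 2 * rho * c * rec_Q rho c m1 - rho ^ 2 * rec_Q rho c m2 end.

Lemma lin_rec_shift rho c z : lin_rec rho c z -> forall m i,
  z (i + m)%nat = rec_P rho c m * z i + rec_Q rho c m * z (S i) /\
  z (i + S m)%nat = rec_P rho c (S m) * z i + rec_Q rho c (S m) * z (S i).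
Proof.
  intros H m i. induction m as [|m [h1 h2]].
  - rewrite Nat.add_0_r, Nat.add_1_r. simpl. split; ring.
  - split; [exact h2|].
    replace (i + S (S m))%nat with (S (S (i + m))) by lia. rewrite H.
    replace (S (i + m)) with (i + S m)%nat by lia. rewrite h1, h2.
    cbn [rec_P rec_Q]. ring.
Qed.

Lemma rec_PQ_bound rho c : 1 <= rho -> Rabs c <= 1 -> forall m,
  (Rabs (rec_P rho c m) <= (3 * rho) ^ m /\ Rabs (rec_Q rho c m) <= (3 * rho) ^ m) /\
  (Rabs (rec_P rho c (S m)) <= (3 * rho) ^ S m /\ Rabs (rec_Q rho c (S m)) <= (3 * rho) ^ S m).
Proof.
  intros Hr Hc. induction m as [|m [[a1 a2] [b1 b2]]].
  - simpl. rewrite Rabs_R1, Rabs_R0. lra.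
  - split; [auto|].
    assert (Hp : 0 <= (3 * rho) ^ m) by (apply pow_le; lra).
    assert (Hcr : Rabs (2 * rho * c) <= 2 * rho).
    { rewrite Rabs_mult, (Rabs_right (2 * rho)) by lra. nra. }
    assert (Hr2 : Rabs (rho ^ 2) = rho ^ 2) by (apply Rabs_right; nra).
    assert (E : forall x y, Rabs x <= (3 * rho) ^ S m -> Rabs y <= (3 * rho) ^ m ->
      Rabs (2 * rho * c * x - rho ^ 2 * y) <= (3 * rho) ^ S (S m)).
    { intros x y hx hy.
      replace ((3 * rho) ^ S (S m)) with (3 * rho * (3 * rho * (3 * rho) ^ m)) by (simpl; ring).
      replace ((3 * rho) ^ S m) with (3 * rho * (3 * rho) ^ m) in hx by (simpl; ring).
      eapply Rle_trans; [apply Rabs_triang|].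
      rewrite Rabs_Ropp, (Rabs_mult (2 * rho * c)), (Rabs_mult (rho ^ 2)), Hr2.
      assert (Rabs (2 * rho * c) * Rabs x <= 2 * rho * (3 * rho * (3 * rho) ^ m))
        by (apply Rmult_le_compat; auto using Rabs_pos).
      assert (rho ^ 2 * Rabs y <= rho ^ 2 * (3 * rho) ^ m) by (apply Rmult_le_compat_l; nra).
      assert (0 <= rho ^ 2 * (3 * rho) ^ m) by (apply Rmult_le_pos; nra).
      replace (rho ^ 2) with (rho * rho) in * by ring. nra. }
    split; apply E; auto.
Qed.

(** * Integer approximations of exponentially growing recurrent sequences *)

Definition far_from_int (eps : R) (z : nat -> R) (i : nat) : bool :=
  negb (Rle_b (dist_int (z i)) eps).

Lemma near_int_ex eps z i :
  far_from_int eps z i = false -> exists u : Z, Rabs (z i - IZR u) <= eps.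
Proof.
  unfold far_from_int, Rle_b. destruct (Rle_dec (dist_int (z i)) eps); [|discriminate].
  intros _. now apply dist_int_le_ex.
Qed.

Definition jump_cost (m : nat) : nat := ((m + 1) / 3)%nat.

Lemma jump_cost_spec m : (3 * jump_cost m <= m + 1 < 3 * jump_cost m + 3)%nat.
Proof.
  unfold jump_cost. pose proof (Nat.div_mod (m + 1) 3 ltac:(lia)).
  pose proof (Nat.mod_upper_bound (m + 1) 3 ltac:(lia)). lia.
Qed.

Lemma last_near_pair f j : f j = true -> (2 * count_lt f (S j) < S j)%nat ->
  exists i, (i + 3 <= S j)%nat /\ f i = false /\ f (S i) = false /\
    (count_lt f i + jump_cost (S j - i) <= count_lt f (S j))%nat.
Proof.
  intros Hj Hcount.
  set (g := fun i => andb (negb (f i)) (negb (f (S i)))).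
  destruct (classic (exists i, (i < S j - 2)%nat /\ g i = true)) as [Hex|Hnex].
  - destruct (last_true_index g (S j - 2) Hex) as [i [Hi [Hgi Hmax]]].
    unfold g in Hgi. apply andb_prop in Hgi. destruct Hgi as [G1 G2].
    apply Bool.negb_true_iff in G1, G2.
    set (m := (S j - i)%nat).
    assert (Hreg : (m - 2 <= 2 * (count_lt f (i + 2 + (m - 2)) - count_lt f (i + 2)))%nat).
    { apply no_two_false_count_last; [| unfold m; lia |].
      - intros t h1 h2. destruct (lt_dec t (S j - 2)) as [ht|ht].
        + assert (Hg := Hmax t ltac:(lia) ht). unfold g in Hg.
          destruct (f t), (f (S t)); simpl in Hg; auto; congruence.
        + right. replace (S t) with j by (unfold m in h2; lia). auto.
      - replace (i + 2 + (m - 2) - 1)%nat with j by (unfold m; lia). auto. }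
    replace (i + 2 + (m - 2))%nat with (S j) in Hreg by (unfold m; lia).
    assert (Hc1 := count_lt_mono f (i + 2) (S j) ltac:(lia)).
    assert (Hc2 := count_lt_mono f i (i + 2) ltac:(lia)).
    assert (Hm := jump_cost_spec m).
    exists i. split; [lia|]. split; [exact G1|]. split; [exact G2|]. fold m. lia.
  - exfalso.
    assert (Hreg : (S j <= 2 * (count_lt f (0 + S j) - count_lt f 0))%nat).
    { apply no_two_false_count_last; [| lia |].
      - intros t h1 h2. destruct (lt_dec t (S j - 2)) as [ht|ht].
        + destruct (f t) eqn:E1; auto. destruct (f (S t)) eqn:E2; auto.
          exfalso. apply Hnex. exists t. split; auto. unfold g. rewrite E1, E2. reflexivity.
        + right. replace (S t) with j by lia. auto.
      - replace (0 + S j - 1)%nat with j by lia. auto. }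
    change (count_lt f 0) with 0%nat in Hreg. rewrite Nat.add_0_l in Hreg. lia.
Qed.

Lemma late_near_pair f N : (2 * count_lt f N + 2 <= N)%nat ->
  exists j, (N - 2 - 2 * count_lt f N <= j)%nat /\ (S j < N)%nat /\ f j = false /\ f (S j) = false.
Proof.
  intros HN.
  set (g := fun j => andb (negb (f j)) (negb (f (S j)))).
  destruct (classic (exists j, (j < N - 1)%nat /\ g j = true)) as [Hex|Hnex].
  - destruct (last_true_index g (N - 1) Hex) as [j [Hj [Hgj Hmax]]].
    assert (Hreg : (N - S j <= S (2 * (count_lt f (S j + (N - S j)) - count_lt f (S j))))%nat).
    { apply no_two_false_count. intros t h1 h2.
      assert (Hg := Hmax t ltac:(lia) ltac:(lia)). unfold g in Hg.
      destruct (f t), (f (S t)); simpl in Hg; auto; congruence. }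
    replace (S j + (N - S j))%nat with N in Hreg by lia.
    assert (Hc := count_lt_mono f (S j) N ltac:(lia)).
    unfold g in Hgj. apply andb_prop in Hgj. destruct Hgj as [G1 G2].
    apply Bool.negb_true_iff in G1, G2.
    exists j. repeat split; auto; lia.
  - exfalso.
    assert (Hreg : (N <= S (2 * (count_lt f (0 + N) - count_lt f 0)))%nat).
    { apply no_two_false_count. intros t h1 h2.
      destruct (f t) eqn:E1; auto. destruct (f (S t)) eqn:E2; auto.
      exfalso. apply Hnex. exists t. split; [lia|]. unfold g. rewrite E1, E2. reflexivity. }
    change (count_lt f 0) with 0%nat in Hreg. rewrite Nat.add_0_l in Hreg. lia.
Qed.

Section Drift.

Variables (rho c : R) (z : nat -> R).
Hypotheses (Hrho : 1 <= rho) (Hc : Rabs c <= 1) (Hz : lin_rec rho c z).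

Lemma lin_rec_int_drift i m (u' v' u : Z) :
  Rabs (z i - IZR u') <= 1 -> Rabs (z (S i) - IZR v') <= 1 -> Rabs (z (i + m)%nat - IZR u) <= 1 ->
  Rabs (IZR u - (rec_P rho c m * IZR u' + rec_Q rho c m * IZR v')) <= 3 * (3 * rho) ^ m.
Proof.
  intros Hu' Hv' Hu.
  destruct (lin_rec_shift rho c z Hz m i) as [Z _].
  destruct (rec_PQ_bound rho c Hrho Hc m) as [[P Q] _].
  replace (IZR u - (rec_P rho c m * IZR u' + rec_Q rho c m * IZR v')) with
    (- (z (i + m)%nat - IZR u) + rec_P rho c m * (z i - IZR u') + rec_Q rho c m * (z (S i) - IZR v'))
    by (rewrite Z; ring).
  eapply Rle_trans; [apply Rabs_triang|]. rewrite Rabs_mult.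
  eapply Rle_trans; [apply Rplus_le_compat_r, Rabs_triang|]. rewrite Rabs_Ropp, Rabs_mult.
  assert (Rabs (rec_P rho c m) * Rabs (z i - IZR u') <= (3 * rho) ^ m * 1)
    by (apply Rmult_le_compat; auto using Rabs_pos).
  assert (Rabs (rec_Q rho c m) * Rabs (z (S i) - IZR v') <= (3 * rho) ^ m * 1)
    by (apply Rmult_le_compat; auto using Rabs_pos).
  assert (1 <= (3 * rho) ^ m) by (apply pow_R1_Rle; lra).
  lra.
Qed.

Lemma lin_rec_next_int j eps (u' u v : Z) : eps * (1 + rho) ^ 2 < / 2 ->
  Rabs (z j - IZR u') <= eps -> Rabs (z (S j) - IZR u) <= eps ->
  Rabs (z (S (S j)) - IZR v) <= eps ->
  v = round_nearest (2 * rho * c * IZR u - rho ^ 2 * IZR u').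
Proof.
  intros Heps Hu' Hu Hv. apply round_nearest_unique.
  assert (Hpos : 0 <= eps) by (eapply Rle_trans; [apply Rabs_pos|exact Hu]).
  replace (IZR v - (2 * rho * c * IZR u - rho ^ 2 * IZR u')) with
    ((IZR v - z (S (S j))) + 2 * rho * c * (z (S j) - IZR u) - rho ^ 2 * (z j - IZR u'))
    by (rewrite Hz; ring).
  apply Rle_lt_trans with (eps + 2 * rho * eps + rho ^ 2 * eps);
    [|replace (eps + 2 * rho * eps + rho ^ 2 * eps) with (eps * (1 + rho) ^ 2) by ring; lra].
  eapply Rle_trans; [apply Rabs_triang|]. rewrite Rabs_Ropp.
  eapply Rle_trans; [apply Rplus_le_compat_r, Rabs_triang|].
  rewrite !Rabs_mult, (Rabs_right 2), (Rabs_right rho), (Rabs_right (rho ^ 2))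
    by (try apply Rle_ge, pow_le; lra).
  rewrite Rabs_minus_sym in Hv.
  assert (Rabs c * Rabs (z (S j) - IZR u) <= 1 * eps) by (apply Rmult_le_compat; auto using Rabs_pos).
  assert (rho ^ 2 * Rabs (z j - IZR u') <= rho ^ 2 * eps) by (apply Rmult_le_compat_l; auto; nra).
  assert (2 * rho * (Rabs c * Rabs (z (S j) - IZR u)) <= 2 * rho * eps) by (apply Rmult_le_compat_l; lra).
  nra.
Qed.

End Drift.

Section PairCount.

Variables (rho c eps B lam : R).
Hypotheses (Hr : 1 <= rho) (Hc : Rabs c <= 1) (He : 0 <= eps <= 1)
  (Heps : eps * (1 + rho) ^ 2 < / 2) (HB : 0 <= B) (Hl : 0 < lam <= 1).

Definition bounded_orbit (z : nat -> R) : Prop :=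
  lin_rec rho c z /\ forall i, Rabs (z i) <= B * rho ^ i.

Definition approx_pairs (j b : nat) (p : Z * Z) : Prop :=
  exists z, bounded_orbit z /\ (count_lt (far_from_int eps z) j <= b)%nat /\
    Rabs (z j - IZR (fst p)) <= eps /\ Rabs (z (S j) - IZR (snd p)) <= eps.

Definition pair_const := 2 * (2 * B + 4) ^ 2 * rho / lam.
Definition jump_const := 2592 * rho ^ 4 / lam.
Definition jump_ratio := lam / (288 * rho ^ 2).
(* A jump over [m] indices costs about [(3 rho)^(2m)] windows but uses up [jump_cost m]
   far indices; [jump_const] is chosen so that, charging [far_factor] per far index,
   the jumps of all lengths together cost at most [lam / 2] (see [jump_terms_sum_le]). *)
Definition far_factor := jump_const ^ 3.
Definition pair_bound (j b : nat) := pair_const * (1 + lam) ^ j * far_factor ^ b.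
Definition jump_radius (m : nat) := 3 * (3 * rho) ^ S m.

Lemma pair_const_pos : 0 < pair_const.
Proof.
  unfold pair_const. assert (0 < (2 * B + 4) ^ 2) by (apply pow_lt; lra).
  apply Rdiv_lt_0_compat; nra.
Qed.

Lemma jump_const_ge : rho ^ 4 <= jump_const /\ 1 <= jump_const.
Proof.
  unfold jump_const. assert (1 <= rho ^ 4) by (apply pow_R1_Rle; lra).
  assert (rho ^ 4 <= 2592 * rho ^ 4 / lam); [|lra].
  apply Rle_trans with (2592 * rho ^ 4); [lra|].
  unfold Rdiv. rewrite <- (Rmult_1_r (2592 * rho ^ 4)) at 1.
  apply Rmult_le_compat_l; [lra|]. rewrite <- Rinv_1. apply Rinv_le_contravar; lra.
Qed.

Lemma far_factor_ge : rho ^ 4 <= far_factor /\ 1 <= far_factor.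
Proof.
  destruct jump_const_ge as [a b]. unfold far_factor.
  assert (jump_const <= jump_const ^ 3); [|lra].
  replace (jump_const ^ 3) with (jump_const * (jump_const * jump_const)) by ring.
  rewrite <- (Rmult_1_r jump_const) at 1. apply Rmult_le_compat_l; nra.
Qed.

Lemma pair_bound_pos j b : 0 <= pair_bound j b.
Proof.
  unfold pair_bound. assert (Hp := pair_const_pos). destruct far_factor_ge.
  assert (0 <= (1 + lam) ^ j) by (apply pow_le; lra).
  assert (0 <= far_factor ^ b) by (apply pow_le; lra).
  apply Rmult_le_pos; [apply Rmult_le_pos|]; lra.
Qed.

Lemma jump_const_ratio : jump_const * jump_ratio = 9 * rho ^ 2.
Proof. unfold jump_const, jump_ratio. field. repeat split; first [lra | apply pow_nonzero; lra]. Qed.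

Lemma jump_ratio_bounds : 0 <= jump_ratio <= 1 / 288.
Proof.
  assert (1 <= rho ^ 2) by (apply pow_R1_Rle; lra).
  unfold jump_ratio. split.
  - apply Rmult_le_pos; [lra|]. apply Rlt_le, Rinv_0_lt_compat; lra.
  - unfold Rdiv. apply Rle_trans with (1 * / (288 * rho ^ 2)).
    + apply Rmult_le_compat_r; [apply Rlt_le, Rinv_0_lt_compat|]; lra.
    + rewrite !Rmult_1_l. apply Rinv_le_contravar; lra.
Qed.

Lemma jump_term_le m b : (1 <= m)%nat -> (jump_cost m <= b)%nat ->
  far_factor ^ (b - jump_cost m) * (144 * (3 * rho) ^ (2 * S m)) <=
  far_factor ^ b * (1296 * rho ^ 2 * jump_const * jump_ratio ^ m).
Proof.
  intros Hm1 Hb. destruct jump_const_ge as [V1 V2]. destruct (jump_cost_spec m) as [h1 h2].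
  destruct jump_ratio_bounds as [T0 _].
  replace (far_factor ^ b) with (far_factor ^ (b - jump_cost m) * far_factor ^ jump_cost m)
    by (rewrite <- pow_add; f_equal; lia).
  assert (HX : 0 <= far_factor ^ (b - jump_cost m)) by (apply pow_le; destruct far_factor_ge; lra).
  rewrite Rmult_assoc. apply Rmult_le_compat_l; auto.
  unfold far_factor. rewrite <- pow_mult.
  assert (Hv : jump_const ^ (m - 1) <= jump_const ^ (3 * jump_cost m)) by (apply Rle_pow; [lra|lia]).
  assert (E : (3 * rho) ^ (2 * S m) = 9 * rho ^ 2 * (jump_const ^ (m - 1) * jump_const * jump_ratio ^ m)).
  { replace (jump_const ^ (m - 1) * jump_const) with (jump_const ^ m)
      by (replace m with (S (m - 1)) at 1 by lia; simpl; ring).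
    rewrite <- Rpow_mult_distr, jump_const_ratio, pow_mult.
    replace ((3 * rho) ^ 2) with (9 * rho ^ 2) by ring. simpl. ring. }
  rewrite E.
  assert (0 <= jump_const * jump_ratio ^ m) by (apply Rmult_le_pos; [lra|apply pow_le; lra]).
  assert (0 <= rho ^ 2) by (apply pow_le; lra).
  replace (144 * (9 * rho ^ 2 * (jump_const ^ (m - 1) * jump_const * jump_ratio ^ m)))
    with (1296 * rho ^ 2 * jump_const ^ (m - 1) * (jump_const * jump_ratio ^ m)) by ring.
  replace (jump_const ^ (3 * jump_cost m) * (1296 * rho ^ 2 * jump_const * jump_ratio ^ m))
    with (1296 * rho ^ 2 * jump_const ^ (3 * jump_cost m) * (jump_const * jump_ratio ^ m)) by ring.
  apply Rmult_le_compat_r; auto. apply Rmult_le_compat_l; nra.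
Qed.

Lemma jump_terms_sum_le n :
  fold_right (fun m acc => 1296 * rho ^ 2 * jump_const * jump_ratio ^ m + acc) 0 (seq 3 n) <= lam / 2.
Proof.
  rewrite (fold_right_scal (1296 * rho ^ 2 * jump_const) (fun m => jump_ratio ^ m)).
  assert (Hr2 : 1 <= rho ^ 2) by (apply pow_R1_Rle; lra).
  assert (Ht := jump_ratio_bounds).
  assert (Hpos : 0 <= 1296 * rho ^ 2 * jump_const) by (destruct jump_const_ge; apply Rmult_le_pos; lra).
  eapply Rle_trans;
    [apply Rmult_le_compat_l; [exact Hpos | exact (fold_right_geom_le jump_ratio 3 n ltac:(lra))]|].
  replace (1296 * rho ^ 2 * jump_const * (jump_ratio ^ 3 / (1 - jump_ratio)))
    with (1296 * rho ^ 2 * (jump_const * jump_ratio) * jump_ratio ^ 2 / (1 - jump_ratio))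
    by (field; lra).
  rewrite jump_const_ratio.
  replace (jump_ratio ^ 2) with (lam ^ 2 / (82944 * rho ^ 2 * rho ^ 2))
    by (unfold jump_ratio; field; repeat split; first [lra | apply pow_nonzero; lra]).
  replace (1296 * rho ^ 2 * (9 * rho ^ 2) * (lam ^ 2 / (82944 * rho ^ 2 * rho ^ 2)) / (1 - jump_ratio))
    with ((11664 / 82944) * lam ^ 2 / (1 - jump_ratio))
    by (field; repeat split; first [lra | apply pow_nonzero; lra]).
  apply Rmult_le_reg_r with (1 - jump_ratio); [lra|].
  unfold Rdiv at 1. rewrite Rmult_assoc, Rinv_l, Rmult_1_r by lra. nra.
Qed.

(* [Lf j' b'] stands for the lists already built at the earlier times [j' < j]. *)

Definition start_pairs (j b : nat) : list (Z * Z) :=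
  if Nat.leb j (2 * b)
  then list_prod (int_window 0 (B * rho ^ j + 1)) (int_window 0 (B * rho ^ S j + 1))
  else nil.

Definition step_pairs (Lf : nat -> nat -> list (Z * Z)) (j b : nat) : list (Z * Z) :=
  match j with
  | O => nil
  | S j' => map (fun p => (snd p, round_nearest (2 * rho * c * IZR (snd p) - rho ^ 2 * IZR (fst p))))
              (Lf j' b)
  end.

Definition jump_window (m : nat) (p : Z * Z) : list (Z * Z) :=
  list_prod
    (int_window (rec_P rho c m * IZR (fst p) + rec_Q rho c m * IZR (snd p)) (jump_radius m))
    (int_window (rec_P rho c (S m) * IZR (fst p) + rec_Q rho c (S m) * IZR (snd p)) (jump_radius m)).

Definition jump_pairs (Lf : nat -> nat -> list (Z * Z)) (j b : nat) : list (Z * Z) :=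
  flat_map (fun m => if Nat.leb (jump_cost m) b
                     then flat_map (jump_window m) (Lf (j - m)%nat (b - jump_cost m)%nat)
                     else nil)
    (seq 3 (j - 2)).

Definition candidate_pairs Lf j b := start_pairs j b ++ step_pairs Lf j b ++ jump_pairs Lf j b.

Lemma length_start_pairs j b : INR (length (start_pairs j b)) <= pair_bound 0 b * (lam / 2).
Proof.
  unfold pair_bound, start_pairs. rewrite pow_O, Rmult_1_r.
  assert (HW := far_factor_ge). assert (Hp := pair_const_pos).
  assert (0 <= far_factor ^ b) by (apply pow_le; lra).
  destruct (Nat.leb j (2 * b)) eqn:E; [|simpl; apply Rmult_le_pos; nra].
  apply Nat.leb_le in E. rewrite length_prod, mult_INR.
  assert (Rj : 1 <= rho ^ j) by (apply pow_R1_Rle; lra).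
  assert (E2 : rho ^ S j = rho * rho ^ j) by reflexivity.
  assert (0 <= B * rho ^ j) by nra. assert (0 <= B * rho ^ S j) by (rewrite E2; nra).
  assert (A1 := length_int_window 0 (B * rho ^ j + 1) ltac:(lra)).
  assert (A2 := length_int_window 0 (B * rho ^ S j + 1) ltac:(lra)).
  eapply Rle_trans; [apply Rmult_le_compat; eauto using pos_INR|].
  assert (G : rho ^ j * rho ^ j <= far_factor ^ b).
  { rewrite <- pow_add. apply Rle_trans with (rho ^ (4 * b)); [apply Rle_pow; [lra|lia]|].
    rewrite pow_mult. apply pow_incr. split; [apply pow_le|]; lra. }
  replace (pair_const * far_factor ^ b * (lam / 2)) with ((2 * B + 4) ^ 2 * rho * far_factor ^ b)
    by (unfold pair_const; field; lra).
  apply Rle_trans with ((2 * B + 4) * rho ^ j * ((2 * B + 4) * rho ^ S j)); [apply Rmult_le_compat; nra|].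
  rewrite E2. replace ((2 * B + 4) * rho ^ j * ((2 * B + 4) * (rho * rho ^ j)))
    with ((2 * B + 4) ^ 2 * rho * (rho ^ j * rho ^ j)) by ring.
  apply Rmult_le_compat_l; [nra | exact G].
Qed.

Lemma length_jump_window m p : INR (length (jump_window m p)) <= 144 * (3 * rho) ^ (2 * S m).
Proof.
  unfold jump_window. rewrite length_prod, mult_INR.
  assert (R1 : 1 <= jump_radius m) by (unfold jump_radius; assert (1 <= (3 * rho) ^ S m) by (apply pow_R1_Rle; lra); lra).
  eapply Rle_trans; [apply Rmult_le_compat; try apply pos_INR; apply length_int_window; lra|].
  unfold jump_radius. replace (2 * S m)%nat with (S m + S m)%nat by lia. rewrite pow_add.
  assert (1 <= (3 * rho) ^ S m) by (apply pow_R1_Rle; lra). nra.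
Qed.

Lemma length_jump_pairs Lf j b : (1 <= j)%nat ->
  (forall j' b', (j' < j)%nat -> INR (length (Lf j' b')) <= pair_bound j' b') ->
  INR (length (jump_pairs Lf j b)) <= pair_bound (j - 1) b * (lam / 2).
Proof.
  intros Hj HL. unfold jump_pairs.
  set (K := pair_bound (j - 1) b). assert (HK : 0 <= K) by apply pair_bound_pos.
  destruct jump_const_ge as [V1 V2]. destruct jump_ratio_bounds as [T0 _].
  eapply Rle_trans.
  { apply (length_flat_map_le _ (fun m => K * (1296 * rho ^ 2 * jump_const * jump_ratio ^ m))).
    intros m Hm. apply in_seq in Hm.
    destruct (Nat.leb (jump_cost m) b) eqn:Eb.
    2:{ simpl. apply Rmult_le_pos; auto. assert (0 <= jump_ratio ^ m) by (apply pow_le; lra).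
        assert (0 <= rho ^ 2) by (apply pow_le; lra). apply Rmult_le_pos; nra. }
    apply Nat.leb_le in Eb.
    eapply Rle_trans; [apply (length_flat_map_le _ (fun _ => 144 * (3 * rho) ^ (2 * S m)));
      intros; apply length_jump_window|].
    rewrite fold_right_const.
    assert (Hp144 : 0 <= 144 * (3 * rho) ^ (2 * S m)) by (assert (0 <= (3 * rho) ^ (2 * S m)) by (apply pow_le; lra); lra).
    eapply Rle_trans; [apply Rmult_le_compat_r; [exact Hp144 | exact (HL (j - m)%nat _ ltac:(lia))]|].
    unfold K, pair_bound.
    assert (JT := jump_term_le m b ltac:(lia) Eb).
    assert (Hpow : (1 + lam) ^ (j - m) <= (1 + lam) ^ (j - 1)) by (apply Rle_pow; [lra|lia]).
    assert (Hp := pair_const_pos).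
    assert (0 <= far_factor ^ (b - jump_cost m)) by (apply pow_le; destruct far_factor_ge; lra).
    assert (0 <= (1 + lam) ^ (j - m)) by (apply pow_le; lra).
    replace (pair_const * (1 + lam) ^ (j - m) * far_factor ^ (b - jump_cost m) * (144 * (3 * rho) ^ (2 * S m)))
      with (pair_const * (1 + lam) ^ (j - m) * (far_factor ^ (b - jump_cost m) * (144 * (3 * rho) ^ (2 * S m))))
      by ring.
    replace (pair_const * (1 + lam) ^ (j - 1) * far_factor ^ b * (1296 * rho ^ 2 * jump_const * jump_ratio ^ m))
      with (pair_const * (1 + lam) ^ (j - 1) * (far_factor ^ b * (1296 * rho ^ 2 * jump_const * jump_ratio ^ m)))
      by ring.
    apply Rmult_le_compat; try apply Rmult_le_pos; try apply Rmult_le_compat_l; lra. }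
  rewrite fold_right_scal. apply Rmult_le_compat_l; auto. apply jump_terms_sum_le.
Qed.

Lemma length_candidate_pairs Lf j b :
  (forall j' b', (j' < j)%nat -> INR (length (Lf j' b')) <= pair_bound j' b') ->
  INR (length (candidate_pairs Lf j b)) <= pair_bound j b.
Proof.
  intros HL. unfold candidate_pairs. rewrite !length_app, !plus_INR.
  assert (A1 := length_start_pairs j b). assert (P0 := pair_bound_pos 0 b).
  destruct j as [|j'].
  - simpl. unfold jump_pairs. simpl. nra.
  - assert (A2 : INR (length (step_pairs Lf (S j') b)) <= pair_bound j' b)
      by (simpl; rewrite length_map; apply HL; lia).
    assert (A3 := length_jump_pairs Lf (S j') b ltac:(lia) HL).
    replace (S j' - 1)%nat with j' in A3 by lia.
    assert (Hmono : pair_bound 0 b <= pair_bound j' b).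
    { unfold pair_bound. assert (Hp := pair_const_pos). destruct far_factor_ge.
      assert (0 <= far_factor ^ b) by (apply pow_le; lra).
      assert (1 <= (1 + lam) ^ j') by (apply pow_R1_Rle; lra).
      rewrite pow_O. apply Rmult_le_compat_r; [lra|]. nra. }
    replace (pair_bound (S j') b) with ((1 + lam) * pair_bound j' b) by (unfold pair_bound; simpl; ring).
    nra.
Qed.

Lemma in_start_pairs j b z (u v : Z) : bounded_orbit z -> (j <= 2 * b)%nat ->
  Rabs (z j - IZR u) <= eps -> Rabs (z (S j) - IZR v) <= eps -> In (u, v) (start_pairs j b).
Proof.
  intros [_ Hbd] Hjb Hu Hv. unfold start_pairs.
  apply Nat.leb_le in Hjb. rewrite Hjb. apply in_prod.
  - assert (0 <= B * rho ^ j) by (apply Rmult_le_pos; [lra | apply pow_le; lra]).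
    apply in_int_window; [lra|]. assert (Hb := Hbd j).
    apply Rabs_le_inv in Hu, Hb. apply Rabs_le. lra.
  - assert (0 <= B * rho ^ S j) by (apply Rmult_le_pos; [lra | apply pow_le; lra]).
    apply in_int_window; [lra|]. assert (Hb := Hbd (S j)).
    apply Rabs_le_inv in Hv, Hb. apply Rabs_le. lra.
Qed.

Definition covers_below (Lf : nat -> nat -> list (Z * Z)) (J : nat) : Prop :=
  forall j b p, (j < J)%nat -> approx_pairs j b p -> In p (Lf j b).

Section Completeness.

Variables (Lf : nat -> nat -> list (Z * Z)) (j : nat).
Hypothesis HLf : covers_below Lf (S j).

Lemma in_step_pairs b z (u v : Z) : bounded_orbit z ->
  (count_lt (far_from_int eps z) (S j) <= b)%nat -> far_from_int eps z j = false ->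
  Rabs (z (S j) - IZR u) <= eps -> Rabs (z (S (S j)) - IZR v) <= eps ->
  In (u, v) (step_pairs Lf (S j) b).
Proof.
  intros Hz Hcnt Hnear Hu Hv. destruct (near_int_ex eps z j Hnear) as [u' Hu'].
  unfold step_pairs. apply in_map_iff. exists (u', u). split.
  - cbn [fst snd]. f_equal. symmetry. exact (lin_rec_next_int rho c z Hr Hc (proj1 Hz) j eps _ _ _ Heps Hu' Hu Hv).
  - apply HLf; [lia|]. exists z. split; [exact Hz|]. split; [|split; assumption].
    assert (Hm := count_lt_mono (far_from_int eps z) j (S j) ltac:(lia)). lia.
Qed.

Lemma in_jump_pairs b z (u v : Z) : bounded_orbit z ->
  (count_lt (far_from_int eps z) (S j) <= b)%nat -> (2 * b < S j)%nat -> far_from_int eps z j = true ->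
  Rabs (z (S j) - IZR u) <= eps -> Rabs (z (S (S j)) - IZR v) <= eps ->
  In (u, v) (jump_pairs Lf (S j) b).
Proof.
  intros [Hrec Hbd] Hcnt Hjb Hfar Hu Hv.
  destruct (last_near_pair (far_from_int eps z) j Hfar ltac:(lia)) as [i [Hi [G1 [G2 Hcost]]]].
  destruct (near_int_ex eps z i G1) as [u' Hu']. destruct (near_int_ex eps z (S i) G2) as [v' Hv'].
  set (m := (S j - i)%nat) in *.
  assert (Hdrift : forall k w, Rabs (z (i + k)%nat - IZR w) <= eps ->
    Rabs (IZR w - (rec_P rho c k * IZR u' + rec_Q rho c k * IZR v')) <= 3 * (3 * rho) ^ k).
  { intros k w Hw. apply (lin_rec_int_drift rho c z Hr Hc Hrec i k u' v' w); lra. }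
  unfold jump_pairs. apply in_flat_map. exists m. split; [apply in_seq; lia|].
  replace (Nat.leb (jump_cost m) b) with true by (symmetry; apply Nat.leb_le; lia).
  apply in_flat_map. exists (u', v'). split.
  - replace (S j - m)%nat with i by lia. apply HLf; [lia|]. exists z. repeat split; auto. simpl. lia.
  - unfold jump_window. apply in_prod; cbn [fst snd]; apply in_int_window;
      unfold jump_radius; try (assert (0 <= (3 * rho) ^ S m) by (apply pow_le; lra); lra).
    + assert (H := Hdrift m u ltac:(replace (i + m)%nat with (S j) by lia; exact Hu)).
      assert ((3 * rho) ^ m <= (3 * rho) ^ S m) by (apply Rle_pow; [lra|lia]). lra.
    + apply Hdrift. replace (i + S m)%nat with (S (S j)) by lia. exact Hv.
Qed.

End Completeness.

Lemma in_candidate_pairs Lf j b p :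
  covers_below Lf j -> approx_pairs j b p -> In p (candidate_pairs Lf j b).
Proof.
  intros HLf [z [Hz [Hcnt [Hu Hv]]]]. destruct p as [u v]. cbn [fst snd] in Hu, Hv.
  unfold candidate_pairs. apply in_or_app.
  destruct (le_lt_dec j (2 * b)) as [Hjb|Hjb]; [left; apply (in_start_pairs j b z); auto|right].
  destruct j as [|j]; [lia|]. apply in_or_app.
  destruct (far_from_int eps z j) eqn:Ebad; [right|left].
  - apply (in_jump_pairs Lf j HLf b z); auto.
  - apply (in_step_pairs Lf j HLf b z); auto.
Qed.

Theorem approx_pairs_count j b : exists l : list (Z * Z),
  INR (length l) <= pair_bound j b /\ forall p, approx_pairs j b p -> In p l.
Proof.
  revert b. induction j as [j IH] using lt_wf_ind.
  assert (Hch : forall jb : nat * nat, exists l : list (Z * Z), (fst jb < j)%nat ->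
    INR (length l) <= pair_bound (fst jb) (snd jb) /\
    forall p, approx_pairs (fst jb) (snd jb) p -> In p l).
  { intros [j' b']. destruct (lt_dec j' j) as [h|h].
    - destruct (IH j' h b') as [l Hl']. exists l. auto.
    - exists nil. simpl. lia. }
  apply functional_choice in Hch. destruct Hch as [Lf HLf].
  intros b. exists (candidate_pairs (fun j' b' => Lf (j', b')) j b). split.
  - apply length_candidate_pairs. intros j' b' h. exact (proj1 (HLf (j', b') h)).
  - intros p. apply in_candidate_pairs. intros j' b' q h. exact (proj2 (HLf (j', b') h) q).
Qed.

End PairCount.

(** * Covers with small [s]-dimensional content *)

Definition small_cover (s delta : R) (E : R -> Prop) (e : R) : Prop :=
  exists (U : nat -> R -> Prop) (d : nat -> R),
    (forall n, 0 < d n <= delta /\ diam_le (U n) (d n)) /\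
    (forall x, E x -> exists n, U n x) /\
    (forall M, sum_f_R0 (fun n => Rpower (d n) s) M <= e).

Lemma small_cover_subset s delta (E F : R -> Prop) e :
  (forall x, E x -> F x) -> small_cover s delta F e -> small_cover s delta E e.
Proof. intros H [U [d [h1 [h2 h3]]]]. exists U, d. split; [|split]; auto. Qed.

Lemma small_cover_le s delta E e1 e2 :
  e1 <= e2 -> small_cover s delta E e1 -> small_cover s delta E e2.
Proof.
  intros h [U [d [h1 [h2 h3]]]]. exists U, d. split; [|split]; auto.
  intros M. specialize (h3 M). lra.
Qed.

Lemma sum_f_R0_le_mono f M1 M2 : (forall n, 0 <= f n) -> (M1 <= M2)%nat ->
  sum_f_R0 f M1 <= sum_f_R0 f M2.
Proof. intros Hf H. induction H; [lra|]. simpl. specialize (Hf (S m)). lra. Qed.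

Lemma sum_geom_half eta M : sum_f_R0 (fun n => eta / 2 ^ S n) M = eta - eta / 2 ^ S M.
Proof. induction M; [simpl; field|]. rewrite tech5, IHM. simpl. field. apply pow_nonzero. lra. Qed.

Lemma sum_indicator c L M : 0 <= c ->
  sum_f_R0 (fun n => if Nat.ltb n L then c else 0) M <= INR L * c.
Proof.
  intros Hc. enough (H : sum_f_R0 (fun n => if Nat.ltb n L then c else 0) M = INR (Nat.min (S M) L) * c).
  { rewrite H. apply Rmult_le_compat_r; auto. apply le_INR. lia. }
  induction M.
  - simpl. destruct L; simpl; lra.
  - rewrite tech5, IHM. destruct (Nat.ltb (S M) L) eqn:E.
    + apply Nat.ltb_lt in E. rewrite (Nat.min_l (S M)), (Nat.min_l (S (S M))), (S_INR (S M)) by lia. ring.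
    + apply Nat.ltb_ge in E. rewrite (Nat.min_r (S (S M))) by lia.
      destruct (le_lt_dec (S M) L); [rewrite Nat.min_l by lia; replace (S M) with L by lia|
        rewrite Nat.min_r by lia]; ring.
Qed.

(* Pad a finite cover by sets of diameter [ell] with tiny empty sets of total content [eta]. *)
Lemma small_cover_finite {A} s delta (E : R -> Prop) (U : A -> R -> Prop) (l : list A) ell eta :
  0 < s -> 0 < ell <= delta -> 0 < eta ->
  (forall a, In a l -> diam_le (U a) ell) ->
  (forall x, E x -> exists a, In a l /\ U a x) ->
  small_cover s delta E (INR (length l) * Rpower ell s + eta).
Proof.
  intros Hs Hell Heta Hdiam Hcov.
  set (pad := fun n => Rmin delta (Rpower (eta / 2 ^ S n) (/ s))).
  exists (fun n x => match nth_error l n with Some a => U a x | None => False end).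
  exists (fun n => if Nat.ltb n (length l) then ell else pad n).
  assert (Hp : forall n, 0 < eta / 2 ^ S n) by (intros; apply Rdiv_lt_0_compat; [|apply pow_lt]; lra).
  assert (Hpad : forall n, 0 < pad n <= delta /\ Rpower (pad n) s <= eta / 2 ^ S n).
  { intros n. unfold pad. assert (0 < Rpower (eta / 2 ^ S n) (/ s)) by apply exp_pos.
    split; [split; [apply Rmin_pos; lra | apply Rmin_l]|].
    apply Rle_trans with (Rpower (Rpower (eta / 2 ^ S n) (/ s)) s).
    - apply Rle_Rpower_l; [lra|]. split; [apply Rmin_pos; lra | apply Rmin_r].
    - rewrite Rpower_mult, Rinv_l, Rpower_1 by (auto; lra). lra. }
  split; [|split].
  - intros n. destruct (Nat.ltb n (length l)) eqn:En.
    + apply Nat.ltb_lt in En. split; [lra|].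
      destruct (nth_error l n) eqn:E2; [apply Hdiam; eapply nth_error_In; eauto | intros x y []].
    + split; [apply Hpad|]. apply Nat.ltb_ge in En. rewrite (proj2 (nth_error_None l n) En).
      intros x y [].
  - intros x Ex. destruct (Hcov x Ex) as [a [Ha Hx]].
    destruct (In_nth_error l a Ha) as [n Hn]. exists n. rewrite Hn. auto.
  - intros M. eapply Rle_trans.
    { apply (sum_Rle _ (fun n => (if Nat.ltb n (length l) then Rpower ell s else 0) + eta / 2 ^ S n)).
      intros n _. destruct (Nat.ltb n (length l)); [assert (0 < eta / 2 ^ S n) by auto|destruct (Hpad n)]; lra. }
    rewrite sum_plus, sum_geom_half.
    assert (0 < eta / 2 ^ S M) by auto.
    assert (Hsi := sum_indicator (Rpower ell s) (length l) M ltac:(left; apply exp_pos)). lra.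
Qed.

Fixpoint pair_index_fuel (fuel n : nat) : nat * nat :=
  match fuel with
  | O => (O, O)
  | S f =>
    if Nat.even n then (O, Nat.div2 n)
    else let p := pair_index_fuel f (Nat.div2 n) in (S (fst p), snd p)
  end.

(* [pair_index n = (m, t)] where [n + 1 = 2^m (2 t + 1)]. *)
Definition pair_index (n : nat) : nat * nat := pair_index_fuel (S n) n.

Lemma pair_index_fuel_enough f1 f2 n :
  (n < f1)%nat -> (n < f2)%nat -> pair_index_fuel f1 n = pair_index_fuel f2 n.
Proof.
  revert f2 n. induction f1; intros f2 n h1 h2; [lia|].
  destruct f2; [lia|]. simpl. destruct (Nat.even n) eqn:E; auto.
  assert (n <> 0%nat) by (intros ->; discriminate).
  assert (Nat.div2 n < n)%nat by (apply Nat.lt_div2; lia).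
  rewrite (IHf1 f2); auto; lia.
Qed.

Lemma pair_index_even t : pair_index (2 * t) = (O, t).
Proof.
  unfold pair_index. cbn [pair_index_fuel].
  rewrite Nat.even_mul. simpl. f_equal. apply Nat.div2_double.
Qed.

Lemma pair_index_odd t : pair_index (S (2 * t)) = (S (fst (pair_index t)), snd (pair_index t)).
Proof.
  unfold pair_index. remember (S (2 * t)) as n. cbn [pair_index_fuel].
  replace (Nat.even n) with false by (subst; rewrite Nat.even_succ, Nat.odd_mul; reflexivity).
  replace (Nat.div2 n) with t by (subst; symmetry; apply Nat.div2_succ_double).
  rewrite (pair_index_fuel_enough n (S t) t); auto; lia.
Qed.

Lemma pair_index_surj m t : exists n, pair_index n = (m, t).
Proof.
  revert t. induction m; intros t; [exists (2 * t)%nat; apply pair_index_even|].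
  destruct (IHm t) as [n0 H]. exists (S (2 * n0)). rewrite pair_index_odd, H. reflexivity.
Qed.

Lemma sum_f_R0_even_odd f K : sum_f_R0 f (S (2 * K)) =
  sum_f_R0 (fun t => f (2 * t)%nat) K + sum_f_R0 (fun t => f (S (2 * t))) K.
Proof.
  induction K; [simpl; ring|].
  replace (S (2 * S K)) with (S (S (S (2 * K)))) by lia.
  rewrite tech5, tech5, IHK, (tech5 (fun t => f (2 * t)%nat) K), (tech5 (fun t => f (S (2 * t))) K).
  replace (2 * S K)%nat with (S (S (2 * K))) by lia. ring.
Qed.

(* Even indices enumerate the [m]-th family, odd ones recursively the later families. *)
Lemma sum_pair_index_le (g : nat -> nat -> R) (e T : nat -> R) :
  (forall m t, 0 <= g m t) -> (forall m K, sum_f_R0 (g m) K <= e m) ->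
  (forall m, 0 <= T m) -> (forall m, e m + T (S m) <= T m) ->
  forall M m, sum_f_R0 (fun n => g (m + fst (pair_index n))%nat (snd (pair_index n))) M <= T m.
Proof.
  intros Hg0 Hg HT He M. induction M as [M IH] using lt_wf_ind. intros m.
  set (h := fun m n => g (m + fst (pair_index n))%nat (snd (pair_index n))).
  destruct M as [|M'].
  - simpl sum_f_R0. change (pair_index 0) with (0%nat, 0%nat). cbn [fst snd]. rewrite Nat.add_0_r.
    assert (H1 := Hg m O). simpl in H1. assert (H2 := He m). assert (H3 := HT (S m)). lra.
  - set (K := Nat.div2 (S M')).
    assert (HK : (S M' <= S (2 * K))%nat).
    { unfold K. pose proof (Nat.div2_odd (S M')). destruct (Nat.odd (S M')); simpl in *; lia. }
    assert (HK2 : (K < S M')%nat) by (apply Nat.lt_div2; lia).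
    eapply Rle_trans; [apply (sum_f_R0_le_mono (h m)); [intros; apply Hg0 | exact HK]|].
    rewrite sum_f_R0_even_odd.
    assert (E1 : sum_f_R0 (fun t => h m (2 * t)%nat) K = sum_f_R0 (g m) K).
    { apply sum_eq. intros t _. unfold h. rewrite pair_index_even. simpl. rewrite Nat.add_0_r. reflexivity. }
    assert (E2 : sum_f_R0 (fun t => h m (S (2 * t))) K = sum_f_R0 (h (S m)) K).
    { apply sum_eq. intros t _. unfold h. rewrite pair_index_odd. simpl. rewrite Nat.add_succ_r. reflexivity. }
    rewrite E1, E2. assert (H1 := Hg m K). assert (H2 : sum_f_R0 (h (S m)) K <= T (S m)) by exact (IH K HK2 (S m)). assert (H3 := He m). lra.
Qed.

Lemma small_cover_union s delta (E : nat -> R -> Prop) (e T : nat -> R) :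
  (forall m, small_cover s delta (E m) (e m)) -> (forall m, 0 <= T m) ->
  (forall m, e m + T (S m) <= T m) ->
  small_cover s delta (fun x => exists m, E m x) (T O).
Proof.
  intros HC HT He.
  assert (Hch : forall m, exists Ud : (nat -> R -> Prop) * (nat -> R),
    (forall n, 0 < snd Ud n <= delta /\ diam_le (fst Ud n) (snd Ud n)) /\
    (forall x, E m x -> exists n, fst Ud n x) /\
    (forall M, sum_f_R0 (fun n => Rpower (snd Ud n) s) M <= e m)).
  { intros m. destruct (HC m) as [U [d H]]. exists (U, d). exact H. }
  apply functional_choice in Hch. destruct Hch as [F HF].
  exists (fun n => fst (F (fst (pair_index n))) (snd (pair_index n))).
  exists (fun n => snd (F (fst (pair_index n))) (snd (pair_index n))).
  split; [|split].
  - intros n. apply HF.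
  - intros x [m Hx]. destruct (proj1 (proj2 (HF m)) x Hx) as [t Ht].
    destruct (pair_index_surj m t) as [n Hn]. exists n. rewrite Hn. auto.
  - intros M. exact (sum_pair_index_le (fun m t => Rpower (snd (F m) t) s) e T
      (fun m t => Rlt_le _ _ (exp_pos _)) (fun m => proj2 (proj2 (HF m))) HT He M O).
Qed.

Lemma small_cover_Union s delta (E : nat -> R -> Prop) :
  (forall m e, 0 < e -> small_cover s delta (E m) e) ->
  forall e, 0 < e -> small_cover s delta (fun x => exists m, E m x) e.
Proof.
  intros H e He.
  assert (Hp : forall m, 0 < 2 ^ m) by (intros; apply pow_lt; lra).
  replace e with (e / 2 ^ 0) by (simpl; field).
  apply (small_cover_union s delta E (fun m => e / 2 ^ S m) (fun m => e / 2 ^ m)).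
  - intros m. apply H, Rdiv_lt_0_compat; auto.
  - intros m. apply Rlt_le, Rdiv_lt_0_compat; auto.
  - intros m. right. simpl. field. apply Rgt_not_eq, Hp.
Qed.

Lemma small_cover_limsup s delta (A : nat -> R -> Prop) K kap N1 :
  0 < K -> 0 < kap < 1 -> (forall N, (N1 <= N)%nat -> small_cover s delta (A N) (K * kap ^ N)) ->
  forall e, 0 < e -> small_cover s delta (limsup_set A) e.
Proof.
  intros HK Hkap HA e He.
  assert (Hy : 0 < e * (1 - kap) / K) by (apply Rdiv_lt_0_compat; nra).
  destruct (pow_lt_1_zero kap ltac:(rewrite Rabs_right; lra) _ Hy) as [N2 HN2].
  set (N0 := (N1 + N2)%nat).
  apply small_cover_subset with (F := fun x => exists m, A (N0 + m)%nat x).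
  { intros x Hx. destruct (Hx N0) as [N [h1 [_ h3]]]. exists (N - N0)%nat.
    replace (N0 + (N - N0))%nat with N by lia. auto. }
  apply small_cover_le with (K * kap ^ N0 / (1 - kap)).
  { assert (H := HN2 N0 ltac:(unfold N0; lia)). rewrite Rabs_right in H by (apply Rle_ge, pow_le; lra).
    apply Rmult_le_reg_r with ((1 - kap) / K); [apply Rdiv_lt_0_compat; lra|].
    replace (K * kap ^ N0 / (1 - kap) * ((1 - kap) / K)) with (kap ^ N0) by (field; lra).
    replace (e * ((1 - kap) / K)) with (e * (1 - kap) / K) by (field; lra). lra. }
  rewrite <- (Nat.add_0_r N0) at 1.
  apply (small_cover_union s delta (fun m => A (N0 + m)%nat)
    (fun m => K * kap ^ (N0 + m)) (fun m => K * kap ^ (N0 + m) / (1 - kap))).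
  - intros m. apply HA. unfold N0. lia.
  - intros m. apply Rmult_le_pos; [apply Rmult_le_pos; [lra | apply pow_le; lra]|].
    apply Rlt_le, Rinv_0_lt_compat; lra.
  - intros m. right. replace (N0 + S m)%nat with (S (N0 + m)) by lia. simpl. field. lra.
Qed.

(** * Two rotating points close to the same lattice points *)

Lemma sin_ge_third a : 0 <= a <= PI / 2 -> a / 3 <= sin a.
Proof.
  intros Ha. assert (PI <= 4) by apply PI_4. assert (PI / 2 < PI) by apply PI2_Rlt_PI.
  destruct (sin_bound a 0 ltac:(lra) ltac:(lra)) as [H1 _].
  replace (sin_approx a (2 * 0 + 1)) with (a - a ^ 3 / 6) in H1
    by (unfold sin_approx, sin_term; simpl; field).
  assert (a * a <= 4) by nra. nra.
Qed.

(* Law of cosines: a short chord between points of modulus at least [cm] forces a small angle. *)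
Lemma angle_le_of_chord c1 c2 cm D eta : 0 < cm -> cm <= c1 -> cm <= c2 -> Rabs D < PI ->
  c1 ^ 2 + c2 ^ 2 - 2 * c1 * c2 * cos D <= eta ^ 2 -> 0 <= eta < cm -> Rabs D <= 3 * eta / cm.
Proof.
  intros Hcm H1 H2 HD HE Heta.
  assert (Hcos : 0 < cos D).
  { destruct (Rlt_le_dec 0 (cos D)) as [h|h]; auto. exfalso.
    assert (0 <= c1 * c2) by nra. assert (c1 * c2 * cos D <= 0) by nra. nra. }
  assert (Hc1 : cos (Rabs D) = cos D) by (unfold Rabs; destruct (Rcase_abs D); auto using cos_neg).
  assert (Hs1 : sin (Rabs D) ^ 2 = sin D ^ 2)
    by (unfold Rabs; destruct (Rcase_abs D); [rewrite sin_neg; ring | auto]).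
  assert (Ha : Rabs D < PI / 2).
  { destruct (Rlt_le_dec (Rabs D) (PI / 2)) as [h|h]; auto. exfalso.
    assert (cos (Rabs D) <= 0) by (apply cos_le_0; lra). lra. }
  assert (Hsl := sin_ge_third (Rabs D) ltac:(split; [apply Rabs_pos|lra])).
  assert (Hsc := sin2_cos2 D). unfold Rsqr in Hsc.
  assert (Hs2 : c1 ^ 2 * sin D ^ 2 <= eta ^ 2) by (assert (0 <= (c1 * cos D - c2) ^ 2) by apply pow2_ge_0; nra).
  assert (Hs3 : (cm * sin (Rabs D)) ^ 2 <= eta ^ 2).
  { rewrite Rpow_mult_distr, Hs1. assert (cm ^ 2 <= c1 ^ 2) by nra. assert (0 <= sin D ^ 2) by apply pow2_ge_0. nra. }
  assert (Hx : cm * (Rabs D / 3) <= eta).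
  { assert (0 <= Rabs D) by apply Rabs_pos.
    assert (cm * (Rabs D / 3) <= cm * sin (Rabs D)) by (apply Rmult_le_compat_l; lra). nra. }
  apply Rmult_le_reg_l with (cm / 3); [lra|].
  replace (cm / 3 * (3 * eta / cm)) with eta by (field; lra). lra.
Qed.

Lemma rotation_recover rho a P Q eps : 1 <= rho -> Rabs P <= 2 * eps ->
  Rabs (rho * (P * cos a - Q * sin a)) <= 2 * eps -> (sin a * P) ^ 2 + (sin a * Q) ^ 2 <= 25 * eps ^ 2.
Proof.
  intros Hr HP HR.
  assert (Hsa : Rabs (sin a) <= 1) by (apply Rabs_le, SIN_bound).
  assert (Hca : Rabs (cos a) <= 1) by (apply Rabs_le, COS_bound).
  assert (Heps : 0 <= eps) by (assert (0 <= Rabs P) by apply Rabs_pos; lra).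
  assert (B1 : Rabs (sin a * P) <= 2 * eps) by (rewrite Rabs_mult; assert (0 <= Rabs P) by apply Rabs_pos; nra).
  assert (B2 : Rabs (sin a * Q) <= 4 * eps).
  { replace (sin a * Q) with (P * cos a - (rho * (P * cos a - Q * sin a)) / rho) by (field; lra).
    eapply Rle_trans; [apply Rabs_triang|]. rewrite Rabs_Ropp, Rabs_mult.
    unfold Rdiv. rewrite Rabs_mult, (Rabs_right (/ rho)) by (apply Rle_ge, Rlt_le, Rinv_0_lt_compat; lra).
    assert (0 <= Rabs P) by apply Rabs_pos. assert (0 <= Rabs (rho * (P * cos a - Q * sin a))) by apply Rabs_pos.
    assert (Rabs P * Rabs (cos a) <= 2 * eps) by nra.
    assert (0 < / rho <= 1) by (split; [apply Rinv_0_lt_compat | rewrite <- Rinv_1; apply Rinv_le_contravar]; lra).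
    nra. }
  rewrite <- (pow2_abs (sin a * P)), <- (pow2_abs (sin a * Q)).
  assert (0 <= Rabs (sin a * P)) by apply Rabs_pos. assert (0 <= Rabs (sin a * Q)) by apply Rabs_pos.
  nra.
Qed.

Lemma phases_close rho a eps c1 c2 cm A1 A2 (u v : Z) :
  1 <= rho -> sin a <> 0 -> 0 < cm -> cm <= c1 -> cm <= c2 -> Rabs (A1 - A2) < PI ->
  Rabs (c1 * cos A1 - IZR u) <= eps -> Rabs (c2 * cos A2 - IZR u) <= eps ->
  Rabs (rho * c1 * cos (A1 + a) - IZR v) <= eps -> Rabs (rho * c2 * cos (A2 + a) - IZR v) <= eps ->
  5 * eps / Rabs (sin a) < cm -> Rabs (A1 - A2) <= 15 * eps / (Rabs (sin a) * cm).
Proof.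
  intros Hr Hs Hcm H1 H2 HD Hu1 Hu2 Hv1 Hv2 Hsmall.
  assert (Has : 0 < Rabs (sin a)) by (apply Rabs_pos_lt; auto).
  assert (Heps : 0 <= eps) by (assert (0 <= Rabs (c1 * cos A1 - IZR u)) by apply Rabs_pos; lra).
  set (P := c1 * cos A1 - c2 * cos A2). set (Q := c1 * sin A1 - c2 * sin A2).
  assert (HP : Rabs P <= 2 * eps).
  { apply Rabs_le_inv in Hu1, Hu2. apply Rabs_le. unfold P. lra. }
  assert (HR : Rabs (rho * (P * cos a - Q * sin a)) <= 2 * eps).
  { replace (rho * (P * cos a - Q * sin a))
      with ((rho * c1 * cos (A1 + a) - IZR v) - (rho * c2 * cos (A2 + a) - IZR v))
      by (unfold P, Q; rewrite !cos_plus; ring).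
    apply Rabs_le_inv in Hv1, Hv2. apply Rabs_le. lra. }
  assert (Hrec := rotation_recover rho a P Q eps Hr HP HR).
  assert (Hchord : c1 ^ 2 + c2 ^ 2 - 2 * c1 * c2 * cos (A1 - A2) = P ^ 2 + Q ^ 2).
  { rewrite cos_minus. unfold P, Q.
    assert (S1 := sin2_cos2 A1). assert (S2 := sin2_cos2 A2). unfold Rsqr in S1, S2.
    replace (c1 ^ 2) with (c1 ^ 2 * (sin A1 * sin A1 + cos A1 * cos A1)) by (rewrite S1; ring).
    replace (c2 ^ 2) with (c2 ^ 2 * (sin A2 * sin A2 + cos A2 * cos A2)) at 1 by (rewrite S2; ring).
    ring. }
  replace (15 * eps / (Rabs (sin a) * cm)) with (3 * (5 * eps / Rabs (sin a)) / cm) by (field; lra).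
  apply (angle_le_of_chord c1 c2 cm); auto.
  - rewrite Hchord. apply Rmult_le_reg_l with (Rabs (sin a) ^ 2); [apply pow_lt; lra|].
    replace (Rabs (sin a) ^ 2 * (5 * eps / Rabs (sin a)) ^ 2) with (25 * eps ^ 2) by (field; lra).
    rewrite pow2_abs. replace (sin a ^ 2 * (P ^ 2 + Q ^ 2)) with ((sin a * P) ^ 2 + (sin a * Q) ^ 2) by ring.
    exact Hrec.
  - split; auto. unfold Rdiv. apply Rmult_le_pos; [lra | apply Rlt_le, Rinv_0_lt_compat; lra].
Qed.

(** * Exponential decay of the total cost of the covers *)

Lemma ln_le_mono x y : 0 < x -> x <= y -> ln x <= ln y.
Proof. intros h1 [h2|<-]; [left; apply ln_increasing|]; lra. Qed.

Lemma exp_le_mono x y : x <= y -> exp x <= exp y.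
Proof. intros [h|<-]; [left; apply exp_increasing|]; lra. Qed.

Lemma exp_INR_mul x N : exp (INR N * x) = exp x ^ N.
Proof.
  induction N; [simpl; rewrite Rmult_0_l, exp_0; auto|].
  rewrite S_INR. replace ((INR N + 1) * x) with (INR N * x + x) by ring.
  rewrite exp_plus, IHN. simpl. ring.
Qed.

Lemma ln_le_affine mu x : 0 < mu -> 0 < x -> ln x <= ln (2 / mu) + mu * x / 2.
Proof.
  intros Hmu Hx.
  rewrite <- (ln_exp (mu * x / 2)), <- ln_mult by (try apply exp_pos; apply Rdiv_lt_0_compat; lra).
  apply ln_le_mono; [lra|]. assert (E := exp_ineq1_le (mu * x / 2)).
  replace x with (2 / mu * (mu * x / 2)) at 1 by (field; lra).
  apply Rmult_le_compat_l; [apply Rlt_le, Rdiv_lt_0_compat|]; lra.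
Qed.

Lemma INR_minus_le a c : INR a - INR c <= INR (a - c).
Proof.
  destruct (le_lt_dec c a); [rewrite minus_INR by auto; lra|].
  assert (INR a < INR c) by (apply lt_INR; lia). assert (0 <= INR (a - c)) by apply pos_INR. lra.
Qed.

Lemma three_div_le N i : (3 <= i)%nat -> (3 * (N / i) <= N)%nat.
Proof.
  intros Hi. pose proof (Nat.div_mod N i ltac:(lia)). pose proof (Nat.mod_upper_bound N i ltac:(lia)). nia.
Qed.

Section CostDecay.

Variables (s L0 lam rho M Cs : R) (i : nat).
Hypotheses (Hs : 0 < s) (HL0 : 0 < L0) (HLr : L0 <= ln rho) (Hrho : 1 < rho)
  (Hl : 0 < lam <= 1) (Hlam : lam <= s * L0 / 4) (HM : 0 < M) (HC : 0 < Cs) (Hi : (3 <= i)%nat)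
  (Hi1 : INR i * (s * L0 / 4) >= 3 * ln 2592 - 3 * ln lam) (Hi2 : INR i * (s / 4) >= 12 + 2 * s).

Lemma ln_far_factor : ln (far_factor rho lam) = 3 * (ln 2592 + 4 * ln rho - ln lam).
Proof.
  destruct (jump_const_ge rho lam ltac:(lra) Hl).
  unfold far_factor. rewrite ln_pow by lra. unfold jump_const, Rdiv.
  assert (0 < rho ^ 4) by (apply pow_lt; lra).
  rewrite (ln_mult (2592 * rho ^ 4) (/ lam)), (ln_mult 2592 (rho ^ 4)), ln_Rinv, ln_pow
    by (try apply Rinv_0_lt_compat; lra).
  simpl. ring.
Qed.

Lemma cover_cost_pos N : 0 < INR (2 * (N / i) + 1) * (M * (1 + lam) ^ N * far_factor rho lam ^ (N / i)) *
    Rpower (Cs / rho ^ (N - 2 - 2 * (N / i))) s.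
Proof.
  destruct (far_factor_ge rho lam ltac:(lra) Hl).
  apply Rmult_lt_0_compat; [apply Rmult_lt_0_compat|apply exp_pos].
  - apply lt_0_INR. lia.
  - repeat apply Rmult_lt_0_compat; auto; apply pow_lt; lra.
Qed.

Lemma ln_cover_cost N : ln (INR (2 * (N / i) + 1) * (M * (1 + lam) ^ N * far_factor rho lam ^ (N / i)) *
    Rpower (Cs / rho ^ (N - 2 - 2 * (N / i))) s) =
  ln (INR (2 * (N / i) + 1)) + ln M + INR N * ln (1 + lam) +
  INR (N / i) * (3 * (ln 2592 + 4 * ln rho - ln lam)) + s * (ln Cs - INR (N - 2 - 2 * (N / i)) * ln rho).
Proof.
  destruct (far_factor_ge rho lam ltac:(lra) Hl).
  assert (0 < INR (2 * (N / i) + 1)) by (apply lt_0_INR; lia).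
  assert (0 < (1 + lam) ^ N) by (apply pow_lt; lra).
  assert (0 < far_factor rho lam ^ (N / i)) by (apply pow_lt; lra).
  assert (0 < rho ^ (N - 2 - 2 * (N / i))) by (apply pow_lt; lra).
  unfold Rpower at 1. rewrite !ln_mult by (repeat apply Rmult_lt_0_compat; auto; apply exp_pos).
  rewrite ln_exp, (ln_pow (1 + lam)), (ln_pow (far_factor rho lam)), ln_far_factor by lra.
  unfold Rdiv. rewrite ln_mult, ln_Rinv, ln_pow by (try apply Rinv_0_lt_compat; lra). ring.
Qed.

(* With [N / i] far indices allowed and pieces at times [j >= N - 2 - 2 (N / i)],
   the number of pieces times their [s]-th power diameter decays geometrically. *)
Lemma cover_cost_decay : exists C kap, 0 < C /\ 0 < kap < 1 /\ forall N, (2 <= N)%nat ->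
  INR (2 * (N / i) + 1) * (M * (1 + lam) ^ N * far_factor rho lam ^ (N / i)) *
    Rpower (Cs / rho ^ (N - 2 - 2 * (N / i))) s <= C * kap ^ N.
Proof.
  set (mu := s * L0 / 4). assert (Hmu : 0 < mu) by (unfold mu; nra).
  exists (exp (ln (2 / mu) + ln M + s * ln Cs + 2 * s * ln rho)), (exp (- (s * L0 / 8))).
  split; [apply exp_pos|]. split; [split; [apply exp_pos|]|].
  { rewrite <- exp_0. apply exp_increasing. nra. }
  intros N HN. rewrite <- (exp_ln _ (cover_cost_pos N)), <- exp_INR_mul, <- exp_plus.
  apply exp_le_mono. rewrite ln_cover_cost.
  set (b := (N / i)%nat). set (jj := (N - 2 - 2 * b)%nat).
  assert (HbR : INR b * INR i <= INR N)
    by (rewrite <- mult_INR; apply le_INR; unfold b; rewrite Nat.mul_comm; apply Nat.Div0.mul_div_le).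
  assert (HiR : 3 <= INR i) by (replace 3 with (INR 3) by (simpl; ring); apply le_INR; auto).
  assert (HbR0 : 0 <= INR b) by apply pos_INR.
  assert (HjjR : INR N - 2 - 2 * INR b <= INR jj).
  { unfold jj. eapply Rle_trans; [|apply INR_minus_le]. rewrite mult_INR.
    assert (H := INR_minus_le N 2). simpl in H |- *. lra. }
  assert (H2b1 : 0 < INR (2 * b + 1) <= INR N)
    by (split; [apply lt_0_INR; lia | apply le_INR; unfold b; pose proof (three_div_le N i Hi); lia]).
  assert (Hlnlam : ln lam <= 0) by (rewrite <- ln_1; apply ln_le_mono; lra).
  assert (L1 := ln_le_affine mu (INR (2 * b + 1)) Hmu (proj1 H2b1)).
  assert (A1 : INR N * ln (1 + lam) <= INR N * mu).
  { apply Rmult_le_compat_l; [apply pos_INR|]. apply Rle_trans with lam; [|unfold mu; lra].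
    rewrite <- (ln_exp lam) at 2. apply ln_le_mono; [lra|]. apply exp_ineq1_le. }
  assert (A2 : INR b * (3 * ln 2592 - 3 * ln lam) <= INR N * mu).
  { apply Rle_trans with (INR b * (INR i * mu)); [apply Rmult_le_compat_l; unfold mu; lra|].
    replace (INR b * (INR i * mu)) with ((INR b * INR i) * mu) by ring.
    apply Rmult_le_compat_r; lra. }
  assert (A3 : INR b * (12 + 2 * s) * ln rho <= INR N * (s / 4) * ln rho).
  { apply Rmult_le_compat_r; [lra|]. apply Rle_trans with (INR b * (INR i * (s / 4))); [apply Rmult_le_compat_l; lra|].
    replace (INR b * (INR i * (s / 4))) with ((INR b * INR i) * (s / 4)) by ring.
    apply Rmult_le_compat_r; lra. }
  assert (A4 : s * (INR N - 2 - 2 * INR b) * ln rho <= s * INR jj * ln rho)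
    by (apply Rmult_le_compat_r; [lra|]; apply Rmult_le_compat_l; lra).
  assert (A5 : INR N * (s * L0) <= INR N * (s * ln rho)) by (apply Rmult_le_compat_l; [apply pos_INR | nra]).
  assert (A6 : mu * INR (2 * b + 1) <= mu * INR N) by (apply Rmult_le_compat_l; lra).
  unfold mu in *. lra.
Qed.

End CostDecay.

(** * The sequences behind [E_qk] *)

Lemma powerRZ_neg_nat x n : powerRZ x (- Z.of_nat n) = / x ^ n.
Proof. destruct n; simpl; [rewrite Rinv_1 | rewrite SuccNat2Pos.id_succ]; reflexivity. Qed.

Lemma powerRZ_sub_nat x a c : x <> 0 -> powerRZ x (Z.of_nat a - Z.of_nat c) = x ^ a * / x ^ c.
Proof.
  intros H. unfold Z.sub. rewrite powerRZ_add by auto. rewrite <- pow_powerRZ, powerRZ_neg_nat. reflexivity.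
Qed.

Section Orbit.

Variables (r gamma b theta : R) (q k : nat).
Hypotheses (Hr : 0 < r < 1) (Hb : 0 < b) (Hq : (1 <= q)%nat) (Hk : (1 <= k)%nat).

Definition growth := / r ^ (q * k).
Definition rot := INR q * INR k * theta.
Definition tol := r ^ (2 * q * k) / 15.

(* The term of [E_qk] with index [n = N - j], read backwards (see [orbit_eq]). *)
Definition orbit (N : nat) (beta tau : R) (j : nat) : R :=
  b * tau * r ^ q * growth ^ j * cos (beta + gamma - INR N * rot + INR j * rot).

Lemma orbit_eq N beta tau n : (n <= N)%nat ->
  b * tau * powerRZ r (Z.of_nat q - Z.of_nat (q * k * (N - n))) *
    cos (beta + gamma - INR n * INR q * INR k * theta) = orbit N beta tau (N - n).
Proof.
  intros Hn. unfold orbit, growth, rot. rewrite powerRZ_sub_nat by lra.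
  rewrite pow_mult, minus_INR by auto. rewrite <- pow_inv.
  f_equal; [ring|]. f_equal. ring.
Qed.

Lemma growth_gt1 : 1 < growth.
Proof.
  unfold growth. assert (0 < r ^ (q * k)) by (apply pow_lt; lra).
  assert (r ^ (q * k) < 1) by (apply pow_lt_1_compat; [lra|lia]).
  rewrite <- Rinv_1. apply Rinv_lt_contravar; lra.
Qed.

Lemma tol_growth : tol = / (15 * growth ^ 2).
Proof.
  unfold tol, growth. replace (2 * q * k)%nat with ((q * k) * 2)%nat by lia.
  rewrite pow_mult. assert (0 < r ^ (q * k)) by (apply pow_lt; lra).
  rewrite pow_inv. field. lra.
Qed.

Lemma orbit_lin_rec N beta tau : lin_rec growth (cos rot) (orbit N beta tau).
Proof.
  intros i. unfold orbit. set (A := beta + gamma - INR N * rot + INR (S i) * rot).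
  replace (beta + gamma - INR N * rot + INR (S (S i)) * rot) with (A + rot) by (unfold A; rewrite !S_INR; ring).
  replace (beta + gamma - INR N * rot + INR i * rot) with (A - rot) by (unfold A; rewrite !S_INR; ring).
  rewrite cos_plus, cos_minus. simpl. ring.
Qed.

Lemma orbit_bound N beta tau i : 0 <= tau <= growth ->
  Rabs (orbit N beta tau i) <= (b * growth * r ^ q) * growth ^ i.
Proof.
  intros Ht. unfold orbit.
  assert (0 < r ^ q) by (apply pow_lt; lra).
  assert (0 <= growth ^ i) by (apply pow_le; assert (Hg := growth_gt1); lra).
  set (A := beta + gamma - INR N * rot + INR i * rot).
  assert (Rabs (cos A) <= 1) by (apply Rabs_le, COS_bound).
  rewrite Rabs_mult, Rabs_right by (apply Rle_ge; repeat apply Rmult_le_pos; lra).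
  assert (b * tau * r ^ q * growth ^ i <= b * growth * r ^ q * growth ^ i).
  { apply Rmult_le_compat_r; auto. apply Rmult_le_compat_r; [lra|]. apply Rmult_le_compat_l; lra. }
  assert (0 <= b * tau * r ^ q * growth ^ i) by (repeat apply Rmult_le_pos; lra).
  assert (0 <= Rabs (cos A)) by apply Rabs_pos.
  nra.
Qed.

Lemma sin_rot_neq0 : irrational (theta / PI) -> sin rot <> 0.
Proof.
  intros Hirr Hs. apply sin_eq_0_0 in Hs. destruct Hs as [z Hz].
  apply Hirr. exists z, (Z.of_nat (q * k)). split; [lia|].
  rewrite <- INR_IZR_INZ, mult_INR. unfold rot in Hz.
  assert (0 < INR q) by (apply lt_0_INR; lia). assert (0 < INR k) by (apply lt_0_INR; lia).
  assert (PI > 0) by apply PI_RGT_0.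
  assert (0 < INR q * INR k * PI) by (apply Rmult_lt_0_compat; [nra|lra]).
  apply (Rmult_eq_reg_r (INR q * INR k * PI)); [|lra].
  replace (theta / PI * (INR q * INR k * PI)) with (INR q * INR k * theta) by (field; lra).
  rewrite Hz. field. lra.
Qed.

Definition orbit_piece (N : nat) (a : nat * (Z * Z)) (beta : R) : Prop :=
  0 <= beta < PI /\ exists tau, 1 <= tau <= growth /\
    Rabs (orbit N beta tau (fst a) - IZR (fst (snd a))) <= tol /\
    Rabs (orbit N beta tau (S (fst a)) - IZR (snd (snd a))) <= tol.

Lemma orbit_piece_diam N j p : sin rot <> 0 ->
  5 * tol / Rabs (sin rot) < b * r ^ q * growth ^ j ->
  diam_le (orbit_piece N (j, p))
    (15 * tol / (Rabs (sin rot) * b * r ^ q) / growth ^ j).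
Proof.
  intros Hs Hsmall beta1 beta2 [Hb1 [t1 [Ht1 [Hu1 Hv1]]]] [Hb2 [t2 [Ht2 [Hu2 Hv2]]]].
  cbn [fst snd] in *.
  assert (Hrho := growth_gt1).
  assert (Hrq : 0 < r ^ q) by (apply pow_lt; lra).
  assert (Hpj : 0 < growth ^ j) by (apply pow_lt; lra).
  assert (Has : 0 < Rabs (sin rot)) by (apply Rabs_pos_lt; auto).
  assert (Hangle : forall beta tau i, orbit N beta tau (i + j) =
      growth ^ i * (b * tau * r ^ q * growth ^ j) * cos (beta + gamma - INR N * rot + INR j * rot + INR i * rot)).
  { intros. unfold orbit. rewrite pow_add, plus_INR. f_equal; [ring|]. f_equal. ring. }
  assert (H0 := Hangle beta1 t1 0%nat). assert (H0' := Hangle beta2 t2 0%nat).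
  assert (H1 := Hangle beta1 t1 1%nat). assert (H1' := Hangle beta2 t2 1%nat).
  simpl Nat.add in *. simpl INR in *. rewrite Rmult_0_l, Rplus_0_r, pow_O, Rmult_1_l in H0, H0'.
  rewrite Rmult_1_l, pow_1 in H1, H1'.
  rewrite H0 in Hu1. rewrite H0' in Hu2. rewrite H1 in Hv1. rewrite H1' in Hv2.
  replace (beta1 - beta2) with ((beta1 + gamma - INR N * rot + INR j * rot) - (beta2 + gamma - INR N * rot + INR j * rot)) by ring.
  replace (15 * tol / (Rabs (sin rot) * b * r ^ q) / growth ^ j)
    with (15 * tol / (Rabs (sin rot) * (b * r ^ q * growth ^ j))) by (field; repeat split; lra).
  apply (phases_close growth rot tol (b * t1 * r ^ q * growth ^ j) (b * t2 * r ^ q * growth ^ j)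
    (b * r ^ q * growth ^ j) _ _ (fst p) (snd p)); auto; try lra.
  - apply Rmult_lt_0_compat; [nra | lra].
  - apply Rmult_le_compat_r; [lra|]. assert (0 < b * r ^ q) by nra. nra.
  - apply Rmult_le_compat_r; [lra|]. assert (0 < b * r ^ q) by nra. nra.
  - apply Rabs_def1; lra.
Qed.

Lemma E_qk_tau delta N beta : E_qk r gamma b theta q k delta N beta ->
  0 <= beta < PI /\ exists tau, 1 <= tau <= growth /\ prop_count r gamma b theta q k N tau beta > 1 - delta.
Proof.
  intros [Hbeta [m [[Hub Hlub] Hm]]]. split; auto.
  apply NNPP. intros Hno. assert (m <= 1 - delta); [|lra].
  apply Hlub. intros y [tau [Ht ->]].
  rewrite powerRZ_neg_nat in Ht. apply Rnot_lt_le. intros Hgt. apply Hno. exists tau. split; [exact Ht | lra].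
Qed.

Lemma prop_count_orbit N beta tau :
  prop_count r gamma b theta q k N tau beta =
  INR (N - count_lt (far_from_int tol (orbit N beta tau)) N) / INR N.
Proof.
  unfold prop_count. do 2 f_equal. rewrite count_upto_rev.
  rewrite <- (count_lt_negb (far_from_int tol (orbit N beta tau)) N) at 2.
  rewrite Nat.add_sub. apply count_lt_ext. intros j hj.
  unfold far_from_int. rewrite Bool.negb_involutive, orbit_eq by lia.
  replace (N - (N - j))%nat with j by lia. reflexivity.
Qed.

Lemma E_qk_few_far i N beta : (3 <= i)%nat -> (2 <= N)%nat ->
  E_qk r gamma b theta q k (/ INR i) N beta ->
  0 <= beta < PI /\ exists tau, 1 <= tau <= growth /\
    (count_lt (far_from_int tol (orbit N beta tau)) N * i < N)%nat.
Proof.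
  intros Hi HN HE. destruct (E_qk_tau _ _ _ HE) as [Hbeta [tau [Htau Hpc]]].
  split; auto. exists tau. split; auto.
  rewrite prop_count_orbit in Hpc.
  set (bad := count_lt (far_from_int tol (orbit N beta tau)) N) in *.
  assert (Hbad : (bad <= N)%nat) by (pose proof (count_lt_negb (far_from_int tol (orbit N beta tau)) N); unfold bad; lia).
  assert (HNpos : 0 < INR N) by (apply lt_0_INR; lia).
  assert (Hipos : 0 < INR i) by (apply lt_0_INR; lia).
  rewrite minus_INR in Hpc by auto.
  apply INR_lt. rewrite mult_INR.
  apply Rmult_lt_reg_r with (/ (INR N * INR i)); [apply Rinv_0_lt_compat; nra|].
  replace (INR bad * INR i * / (INR N * INR i)) with (1 - (INR N - INR bad) / INR N) by (field; lra).
  replace (INR N * / (INR N * INR i)) with (/ INR i) by (field; lra).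
  lra.
Qed.

Lemma E_qk_near_pair i N beta : (3 <= i)%nat -> (2 <= N)%nat ->
  E_qk r gamma b theta q k (/ INR i) N beta ->
  exists j p, (N - 2 - 2 * (N / i) <= j <= N - 2)%nat /\
    approx_pairs growth (cos rot) tol (b * growth * r ^ q) j (N / i) p /\ orbit_piece N (j, p) beta.
Proof.
  intros Hi HN HE. destruct (E_qk_few_far i N beta Hi HN HE) as [Hbeta [tau [Htau Hbi]]].
  set (z := orbit N beta tau) in *.
  set (bad := count_lt (far_from_int tol z) N) in *.
  assert (HbN : (bad <= N / i)%nat) by (apply Nat.div_le_lower_bound; lia).
  assert (H3 : (3 * (N / i) <= N)%nat).
  { pose proof (Nat.div_mod N i ltac:(lia)). pose proof (Nat.mod_upper_bound N i ltac:(lia)). nia. }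
  destruct (late_near_pair (far_from_int tol z) N ltac:(fold bad; nia)) as [j [Hj1 [Hj2 [G1 G2]]]].
  destruct (near_int_ex tol z j G1) as [u Hu]. destruct (near_int_ex tol z (S j) G2) as [v Hv].
  fold bad in Hj1.
  exists j, (u, v). split; [lia|]. split.
  - exists z. split; [split|split].
    + apply orbit_lin_rec.
    + intros n. apply orbit_bound. lra.
    + assert (Hc := count_lt_mono (far_from_int tol z) j N ltac:(lia)). fold bad in Hc. lia.
    + split; auto.
  - split; auto. exists tau. split; auto.
Qed.

Lemma tol_bounds : 0 < tol <= 1 /\ tol * (1 + growth) ^ 2 < / 2.
Proof.
  rewrite tol_growth. assert (Hrho := growth_gt1).
  assert (Hr2 : 1 < growth ^ 2) by (simpl; nra).
  split; [split|].
  - apply Rinv_0_lt_compat. lra.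
  - rewrite <- Rinv_1. apply Rinv_le_contravar; lra.
  - apply Rmult_lt_reg_r with (15 * growth ^ 2); [lra|].
    rewrite Rmult_assoc, (Rmult_comm ((1 + growth) ^ 2)), <- Rmult_assoc, Rinv_l by lra. simpl. nra.
Qed.

Lemma ln_growth_ge : 0 < ln (/ r) <= ln growth.
Proof.
  split.
  - rewrite <- ln_1. apply ln_increasing; [lra|]. rewrite <- Rinv_1. apply Rinv_lt_contravar; lra.
  - assert (0 < ln (/ r)) by (rewrite <- ln_1; apply ln_increasing; [lra|];
      rewrite <- Rinv_1; apply Rinv_lt_contravar; lra).
    unfold growth. rewrite <- pow_inv, ln_pow by (apply Rinv_0_lt_compat; lra).
    assert (1 <= INR (q * k)) by (replace 1 with (INR 1) by reflexivity; apply le_INR; nia). nra.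
Qed.

Lemma approx_pairs_lists lam : 0 < lam <= 1 -> exists Lf : nat -> nat -> list (Z * Z),
  (forall j bb, INR (length (Lf j bb)) <= pair_bound growth (b * growth * r ^ q) lam j bb) /\
  (forall j bb p, approx_pairs growth (cos rot) tol (b * growth * r ^ q) j bb p -> In p (Lf j bb)).
Proof.
  intros Hl. assert (Hrho := growth_gt1). destruct tol_bounds as [Ht1 Ht2].
  assert (Hch : forall jb : nat * nat, exists l : list (Z * Z),
    INR (length l) <= pair_bound growth (b * growth * r ^ q) lam (fst jb) (snd jb) /\
    forall p, approx_pairs growth (cos rot) tol (b * growth * r ^ q) (fst jb) (snd jb) p -> In p l).
  { intros [j bb]. apply approx_pairs_count; try lra.
    - apply Rabs_le, COS_bound.
    - assert (0 < r ^ q) by (apply pow_lt; lra). apply Rmult_le_pos; nra. }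
  apply functional_choice in Hch. destruct Hch as [Lf HLf].
  exists (fun j bb => Lf (j, bb)). split; intros j bb; apply (HLf (j, bb)).
Qed.

Section Covers.

Variables (s delta : R) (i : nat) (Lf : nat -> nat -> list (Z * Z)).
Hypotheses (Hs : 0 < s) (Hdelta : 0 < delta) (Hi : (3 <= i)%nat) (Hsin : sin rot <> 0)
  (HLf : forall j bb p, approx_pairs growth (cos rot) tol (b * growth * r ^ q) j bb p -> In p (Lf j bb)).

Definition piece_const := 15 * tol / (Rabs (sin rot) * b * r ^ q).
Definition first_time N := (N - 2 - 2 * (N / i))%nat.

Definition pieces N : list (nat * (Z * Z)) :=
  flat_map (fun j => map (fun p => (j, p)) (Lf j (N / i))) (seq (first_time N) (2 * (N / i) + 1)).

Lemma piece_const_pos : 0 < piece_const.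
Proof.
  unfold piece_const. destruct tol_bounds as [[Ht _] _].
  assert (0 < Rabs (sin rot)) by (apply Rabs_pos_lt; auto). assert (0 < r ^ q) by (apply pow_lt; lra).
  apply Rdiv_lt_0_compat; [lra|]. repeat apply Rmult_lt_0_compat; lra.
Qed.

Lemma E_qk_small_cover_at N eta : (2 <= N)%nat -> 0 < eta ->
  piece_const / delta + piece_const / 3 + 1 <= growth ^ first_time N ->
  small_cover s delta (E_qk r gamma b theta q k (/ INR i) N)
    (INR (length (pieces N)) * Rpower (piece_const / growth ^ first_time N) s + eta).
Proof.
  intros HN Heta Hbig. assert (Hrho := growth_gt1). assert (HC := piece_const_pos).
  assert (Hpos : 0 < growth ^ first_time N) by (apply pow_lt; lra).
  apply (small_cover_finite s delta _ (orbit_piece N)); auto.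
  - split; [apply Rdiv_lt_0_compat; auto|].
    apply Rmult_le_reg_r with (growth ^ first_time N); [auto|].
    unfold Rdiv. rewrite Rmult_assoc, Rinv_l by lra.
    assert (piece_const <= delta * (piece_const / delta + piece_const / 3 + 1)); [|nra].
    replace (delta * (piece_const / delta + piece_const / 3 + 1))
      with (piece_const + delta * (piece_const / 3 + 1)) by (field; lra).
    assert (0 <= delta * (piece_const / 3 + 1)) by (apply Rmult_le_pos; lra). lra.
  - intros [j p] Hin. unfold pieces in Hin. apply in_flat_map in Hin.
    destruct Hin as [j' [Hj' Hin]]. apply in_map_iff in Hin.
    destruct Hin as [p' [Heq _]]. inversion Heq; subst j' p'. apply in_seq in Hj'.
    assert (Hrj : growth ^ first_time N <= growth ^ j) by (apply Rle_pow; [lra|lia]).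
    assert (Has : 0 < Rabs (sin rot)) by (apply Rabs_pos_lt; auto).
    assert (Hrq : 0 < r ^ q) by (apply pow_lt; lra).
    intros beta1 beta2 H1 H2.
    eapply Rle_trans; [apply (orbit_piece_diam N j p Hsin); auto|].
    + replace (5 * tol / Rabs (sin rot)) with (piece_const / 3 * (b * r ^ q))
        by (unfold piece_const; field; repeat split; lra).
      assert (0 < piece_const / delta) by (apply Rdiv_lt_0_compat; lra).
      assert (piece_const / 3 < growth ^ j) by lra. assert (0 < b * r ^ q) by nra. nra.
    + fold piece_const. unfold Rdiv. apply Rmult_le_compat_l; [lra|]. apply Rinv_le_contravar; lra.
  - intros beta HE.
    destruct (E_qk_near_pair i N beta Hi HN HE) as [j [p [Hj [Hp HA]]]].
    exists (j, p). split; auto. unfold pieces. apply in_flat_map. exists j. split.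
    + apply in_seq. unfold first_time. lia.
    + apply in_map_iff. exists p. auto.
Qed.

End Covers.

Lemma length_pieces lam i Lf N : (3 <= i)%nat -> 0 < lam <= 1 ->
  (forall j bb, INR (length (Lf j bb)) <= pair_bound growth (b * growth * r ^ q) lam j bb) ->
  INR (length (pieces i Lf N)) <= INR (2 * (N / i) + 1) * pair_bound growth (b * growth * r ^ q) lam N (N / i).
Proof.
  intros Hi Hl HLen. assert (Hrho := growth_gt1). assert (H3 := three_div_le N i Hi).
  assert (HM := pair_const_pos growth (b * growth * r ^ q) lam ltac:(lra)
    ltac:(assert (0 < r ^ q) by (apply pow_lt; lra); apply Rmult_le_pos; nra) Hl).
  unfold pieces. eapply Rle_trans.
  - apply (length_flat_map_le _ (fun _ => pair_bound growth (b * growth * r ^ q) lam N (N / i))).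
    intros j Hj. apply in_seq in Hj. unfold first_time in Hj. rewrite length_map.
    eapply Rle_trans; [apply HLen|]. unfold pair_bound.
    destruct (far_factor_ge growth lam ltac:(lra) Hl).
    apply Rmult_le_compat_r; [apply pow_le; lra|]. apply Rmult_le_compat_l; [lra|].
    apply Rle_pow; [lra|lia].
  - rewrite fold_right_const, length_seq. lra.
Qed.

Lemma limsup_E_qk_small_cover s lam i : irrational (theta / PI) -> 0 < s -> (3 <= i)%nat ->
  0 < lam <= 1 -> lam <= s * ln (/ r) / 4 ->
  INR i * (s * ln (/ r) / 4) >= 3 * ln 2592 - 3 * ln lam -> INR i * (s / 4) >= 12 + 2 * s ->
  forall delta e, 0 < delta -> 0 < e ->
  small_cover s delta (limsup_set (fun N => E_qk r gamma b theta q k (/ INR i) N)) e.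
Proof.
  intros Hirr Hs Hi Hl Hl2 Hi1 Hi2 delta e Hdelta He.
  assert (Hrho := growth_gt1). destruct ln_growth_ge as [HL0 HLr].
  assert (Hsin := sin_rot_neq0 Hirr). assert (HCs := piece_const_pos Hsin).
  destruct (approx_pairs_lists lam Hl) as [Lf [HLen HLf]].
  assert (HM := pair_const_pos growth (b * growth * r ^ q) lam ltac:(lra)
    ltac:(assert (0 < r ^ q) by (apply pow_lt; lra); apply Rmult_le_pos; nra) Hl).
  destruct (cover_cost_decay s (ln (/ r)) lam growth _ piece_const i Hs HL0 HLr Hrho Hl Hl2 HM HCs Hi Hi1 Hi2)
    as [C [kap [HC [Hkap Hest]]]].
  destruct (Pow_x_infinity growth ltac:(rewrite Rabs_right; lra) (piece_const / delta + piece_const / 3 + 1))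
    as [J HJ].
  apply (small_cover_limsup s delta _ (C + 1) kap (3 * J + 6)); auto; [lra|].
  intros N HN.
  assert (HJN : (J <= first_time i N)%nat) by (pose proof (three_div_le N i Hi); unfold first_time; lia).
  assert (Hbig := HJ _ HJN). rewrite Rabs_right in Hbig by (apply Rle_ge, pow_le; lra).
  apply small_cover_le with
    (INR (length (pieces i Lf N)) * Rpower (piece_const / growth ^ first_time i N) s + kap ^ N).
  - assert (Hlen := length_pieces lam i Lf N Hi Hl HLen).
    assert (HE := Hest N ltac:(lia)).
    assert (0 <= Rpower (piece_const / growth ^ first_time i N) s) by (left; apply exp_pos).
    assert (INR (length (pieces i Lf N)) * Rpower (piece_const / growth ^ first_time i N) s <= C * kap ^ N).
    { eapply Rle_trans; [apply Rmult_le_compat_r; [auto | exact Hlen]|]. exact HE. }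
    assert (0 <= kap ^ N) by (apply pow_le; lra). nra.
  - apply E_qk_small_cover_at; auto; [lia | apply pow_lt; lra | lra].
Qed.

End Orbit.

Lemma large_index a c X Y : 0 < a -> 0 < c ->
  exists i : nat, (3 <= i)%nat /\ INR i * a >= X /\ INR i * c >= Y.
Proof.
  intros Ha Hc. destruct (INR_unbounded (Rmax (X / a) (Y / c))) as [n Hn].
  exists (Nat.max 3 n). assert (Hin : INR n <= INR (Nat.max 3 n)) by (apply le_INR; lia).
  assert (M1 := Rmax_l (X / a) (Y / c)). assert (M2 := Rmax_r (X / a) (Y / c)).
  split; [lia|]. split; apply Rle_ge.
  - replace X with (X / a * a) by (field; lra). apply Rmult_le_compat_r; lra.
  - replace Y with (Y / c * c) by (field; lra). apply Rmult_le_compat_r; lra.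
Qed.

Lemma E_set_small_cover r gamma b theta s : 0 < r < 1 -> 0 < b -> irrational (theta / PI) -> 0 < s ->
  forall delta e, 0 < delta -> 0 < e -> small_cover s delta (E_set r gamma b theta) e.
Proof.
  intros Hr Hb Hirr Hs delta e Hdelta He.
  assert (HL0 : 0 < ln (/ r)) by (rewrite <- ln_1; apply ln_increasing; [lra|];
    rewrite <- Rinv_1; apply Rinv_lt_contravar; lra).
  set (lam := Rmin 1 (s * ln (/ r) / 4)).
  assert (Hl : 0 < lam <= 1) by (split; [apply Rmin_pos; nra | apply Rmin_l]).
  destruct (large_index (s * ln (/ r) / 4) (s / 4) (3 * ln 2592 - 3 * ln lam) (12 + 2 * s))
    as [i [Hi [Hi1 Hi2]]]; try nra.
  apply small_cover_subset with (F := fun beta => exists q' k',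
    limsup_set (fun N => E_qk r gamma b theta (S q') (S k') (/ INR i) N) beta).
  { intros beta HE. destruct (HE i Hi) as [q [k [Hq [Hk Hls]]]].
    exists (pred q), (pred k). replace (S (pred q)) with q by lia. replace (S (pred k)) with k by lia. exact Hls. }
  apply small_cover_Union; auto. intros q' e1 He1.
  apply small_cover_Union; auto. intros k' e2 He2.
  apply (limsup_E_qk_small_cover r gamma b theta (S q') (S k') Hr Hb ltac:(lia) ltac:(lia) s lam i); auto; apply Rmin_r.
Qed.

Lemma hausdorff_dim_zero E : (forall s, 0 < s -> Hmeasure_zero s E) -> hausdorff_dim_is E 0.
Proof.
  intros Hnull. split.
  - intros x [Hx _]. lra.
  - intros m' Hm'. destruct (Rle_dec m' 0) as [h|h]; auto.
    assert (Hs : 0 < m' / 2) by lra.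
    assert (H := Hm' (m' / 2) (conj (Rlt_le _ _ Hs) (Hnull _ Hs))). lra.
Qed.

Theorem lemma4p4 (r gamma b theta : R) :
  0 < r < 1 -> 0 < b -> irrational (theta / PI) ->
  hausdorff_dim_is (E_set r gamma b theta) 0.
Proof.
  intros Hr Hb Hirr. apply hausdorff_dim_zero.
  intros s Hs delta Hdelta e He. now apply E_set_small_cover.
Qed.
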